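(* Let $X$ be a real Banach space, $f\in\Gamma_0(X)$, $S_f\ne\emptyset$, $\varepsilon\ge0$. Then $$\mathrm{Er}\{\mathrm{Ptb}^w(f,\varepsilon)\}>0\Rightarrow\mathrm{Er}\{\mathrm{Ptb}^w_l(f,\varepsilon)\}>0\Rightarrow\varepsilon\le|\partial f|_{\rm bd},$$ and $$\varepsilon<|\partial f|_{\rm bd}\Rightarrow\mathrm{Er}\{\mathrm{Ptb}(f,\varepsilon)\}>0\Rightarrow\mathrm{Er}\{\mathrm{Ptb}_l(f,\varepsilon)\}>0.$$
   Context: $X^*$ is the dual, $\mathbb{B}^*$ its closed unit ball. $\Gamma_0(X)$: proper convex lsc extended-real-valued functions on $X$. For convex $f$, $\partial f(x):=\{x^*\in X^*\mid \langle x^*,u-x\rangle\le f(u)-f(x)\ \forall u\in X\}$. $d(x,S)=\inf_{u\in S}\|u-x\|$, $d(x,\emptyset)=+\infty$, $\inf\emptyset=+\infty$. $S_f:=\{x\mid f(x)\le0\}$, $S_f^=:=\{x\mid f(x)=0\}$. Global error bound modulus: $\mathrm{Er}\,f:=\inf_{f(x)>0}\frac{f(x)}{d(x,S_f)}$. $|\partial f|_{\rm bd}:=\inf_{f(x)=0} d(0,\mathrm{bd}\,\partial f(x))$ (boundary in norm topology of $X^*$). For $x\in S_f^=$, $\varepsilon,\delta\ge0$: $\tau(f,x,\varepsilon,\delta):=\inf_{u:\,f(u)\ge-\varepsilon\|u-x\|-\delta} d(0,\partial f(u))$ if $0\notin\mathrm{int}\,\partial f(x)$, and $:=d(0,\mathrm{bd}\,\partial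 f(x))$ if $0\in\mathrm{int}\,\partial f(x)$. For $\varepsilon\ge0$: $g\in\mathrm{Ptb}(f,\varepsilon)$ if $S_g\ne\emptyset$, $g=f+p$ with $p:X\to\mathbb{R}$ convex, and there exist $x\in S_f^=$ and $\xi\ge0$ such that $\xi+|\partial f|_{\rm bd}-\tau(f,x,\xi,|p(x)|)\le\varepsilon$ and $|p(u)-p(x)|\le\xi\|u-x\|$ for all $u\in X$. $g\in\mathrm{Ptb}^w(f,\varepsilon)$ if $S_g\ne\emptyset$, $g=f+p$ with $p:X\to\mathbb{R}$ convex, and there is $x\in S_f^=$ with $|p(u)-p(x)|\le\varepsilon\|u-x\|$ for all $u$. $\mathrm{Ptb}_l(f,\varepsilon):=\{g\mid g(u)-f(u)=\langle x^*,u-x\rangle\ \forall u,\ \text{for some } x\in S_f^=,\ \xi\ge0,\ x^*\in\xi\mathbb{B}^*\text{ with }\xi+|\partial f|_{\rm bd}-\tau(f,x,\xi,0)\le\varepsilon\}$; $\mathrm{Ptb}^w_l(f,\varepsilon):=\{g\mid g(u)-f(u)=\langle x^*,u-x\rangle\ \forall u,\ \text{for some } x\in S_f^=,\ x^*\in\varepsilon\mathbb{B}^*\}$. For each such family $\mathcal{F}$, $\mathrm{Er}\{\mathcal{F}\}:=\inf_{g\in\mathcal{F}}\mathrm{Er}\,g$. *)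

From Stdlib Require Import Reals Lra Classical ClassicalEpsilon FunctionalExtensionality.
Open Scope R_scope.

Inductive Rbar : Type := Finite (r : R) | p_infty | m_infty.

Definition Rbar_le (x y : Rbar) : Prop :=
  match x, y with
  | m_infty, _ => True
  | _, p_infty => True
  | Finite a, Finite b => a <= b
  | _, _ => False
  end.

Definition Rbar_lt (x y : Rbar) : Prop := Rbar_le x y /\ x <> y.

Definition Rbar_addr (a : R) (y : Rbar) : Rbar :=
  match y with
  | Finite b => Finite (a + b)
  | p_infty => p_infty
  | m_infty => m_infty
  end.

Definition is_glb (E : Rbar -> Prop) (m : Rbar) : Prop :=
  (forall y, E y -> Rbar_le m y) /\
  (forall l, (forall y, E y -> Rbar_le l y) -> Rbar_le l m).
Definition is_lub (E : Rbar -> Prop) (m : Rbar) : Prop :=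
  (forall y, E y -> Rbar_le y m) /\
  (forall l, (forall y, E y -> Rbar_le y l) -> Rbar_le m l).

(* inf E (inf of the empty set is +oo), sup E *)
Definition Rbar_inf (E : Rbar -> Prop) : Rbar :=
  epsilon (inhabits p_infty) (is_glb E).
Definition Rbar_sup (E : Rbar -> Prop) : Rbar :=
  epsilon (inhabits p_infty) (is_lub E).

Definition Rbar_ratio (a b : Rbar) : Rbar :=
  match a, b with
  | Finite x, Finite y => if Rlt_dec 0 y then Finite (x / y) else p_infty
  | Finite _, p_infty => Finite 0
  | _, _ => p_infty
  end.

Record Banach : Type := {
  car :> Type;
  vzero : car;
  vadd : car -> car -> car;
  vopp : car -> car;
  vscal : R -> car -> car;
  vnorm : car -> R;
  vadd_assoc : forall x y z, vadd x (vadd y z) = vadd (vadd x y) z;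
  vadd_comm : forall x y, vadd x y = vadd y x;
  vadd_zero : forall x, vadd x vzero = x;
  vadd_opp : forall x, vadd x (vopp x) = vzero;
  vscal_one : forall x, vscal 1 x = x;
  vscal_assoc : forall a b x, vscal a (vscal b x) = vscal (a * b) x;
  vscal_distr_l : forall a x y, vscal a (vadd x y) = vadd (vscal a x) (vscal a y);
  vscal_distr_r : forall a b x, vscal (a + b) x = vadd (vscal a x) (vscal b x);
  vnorm_eq0 : forall x, vnorm x = 0 -> x = vzero;
  vnorm_scal : forall a x, vnorm (vscal a x) = Rabs a * vnorm x;
  vnorm_triangle : forall x y, vnorm (vadd x y) <= vnorm x + vnorm y;
  vcomplete : forall u : nat -> car,
    (forall e, 0 < e -> exists N, forall m n, (N <= m)%nat -> (N <= n)%nat ->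
        vnorm (vadd (u m) (vopp (u n))) < e) ->
    exists l, forall e, 0 < e -> exists N, forall n, (N <= n)%nat ->
        vnorm (vadd (u n) (vopp l)) < e
}.

Section Banach_defs.
Context {X : Banach}.

Definition vsub (x y : X) : X := vadd X x (vopp X y).

(* elements of X^* are the continuous linear functionals X -> R *)
Definition is_dual (phi : X -> R) : Prop :=
  (forall x y, phi (vadd X x y) = phi x + phi y) /\
  (forall a x, phi (vscal X a x) = a * phi x) /\
  (exists M, forall x, Rabs (phi x) <= M * vnorm X x).

Definition dnorm (phi : X -> R) : Rbar :=
  Rbar_sup (fun r => exists x, vnorm X x <= 1 /\ r = Finite (Rabs (phi x))).

Definition dzero : X -> R := fun _ => 0.
Definition dsub (phi psi : X -> R) : X -> R := fun x => phi x - psi x.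

(* interior, closure, boundary of A ⊆ X^* in the norm topology of X^* *)
Definition dinterior (A : (X -> R) -> Prop) (phi : X -> R) : Prop :=
  is_dual phi /\ exists r, 0 < r /\
    forall psi, is_dual psi -> Rbar_lt (dnorm (dsub psi phi)) (Finite r) -> A psi.
Definition dclosure (A : (X -> R) -> Prop) (phi : X -> R) : Prop :=
  is_dual phi /\ forall r, 0 < r ->
    exists psi, A psi /\ Rbar_lt (dnorm (dsub psi phi)) (Finite r).
Definition dboundary (A : (X -> R) -> Prop) (phi : X -> R) : Prop :=
  dclosure A phi /\ ~ dinterior A phi.

(* d(0, A) for A ⊆ X^*  (= +oo if A is empty) *)
Definition ddist0 (A : (X -> R) -> Prop) : Rbar :=
  Rbar_inf (fun r => exists phi, A phi /\ r = dnorm phi).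

(* d(x, S) for S ⊆ X  (= +oo if S is empty) *)
Definition dist (x : X) (S : X -> Prop) : Rbar :=
  Rbar_inf (fun r => exists u, S u /\ r = Finite (vnorm X (vsub u x))).

Definition proper (f : X -> Rbar) : Prop :=
  (exists x, exists r, f x = Finite r) /\ (forall x, f x <> m_infty).

Definition convex (f : X -> Rbar) : Prop :=
  forall x y a b t, 0 <= t <= 1 ->
    Rbar_le (f x) (Finite a) -> Rbar_le (f y) (Finite b) ->
    Rbar_le (f (vadd X (vscal X t x) (vscal X (1 - t) y))) (Finite (t * a + (1 - t) * b)).

Definition lsc (f : X -> Rbar) : Prop :=
  forall x a, Rbar_lt (Finite a) (f x) ->
    exists d, 0 < d /\ forall y, vnorm X (vsub y x) < d -> Rbar_lt (Finite a) (f y).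

Definition Gamma0 (f : X -> Rbar) : Prop := proper f /\ convex f /\ lsc f.

Definition convex_real (p : X -> R) : Prop :=
  forall x y t, 0 <= t <= 1 ->
    p (vadd X (vscal X t x) (vscal X (1 - t) y)) <= t * p x + (1 - t) * p y.

(* subdifferential; empty where f x is not finite *)
Definition subdiff (f : X -> Rbar) (x : X) (phi : X -> R) : Prop :=
  is_dual phi /\ exists fx, f x = Finite fx /\
    forall u, Rbar_le (Finite (phi (vsub u x) + fx)) (f u).

Definition Sf (f : X -> Rbar) (x : X) : Prop := Rbar_le (f x) (Finite 0).
Definition Sf_eq (f : X -> Rbar) (x : X) : Prop := f x = Finite 0.

Definition Er (f : X -> Rbar) : Rbar :=
  Rbar_inf (fun r => exists x, Rbar_lt (Finite 0) (f x) /\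
                               r = Rbar_ratio (f x) (dist x (Sf f))).

Definition subdiff_bd (f : X -> Rbar) : Rbar :=
  Rbar_inf (fun r => exists x, Sf_eq f x /\ r = ddist0 (dboundary (subdiff f x))).

Definition tau (f : X -> Rbar) (x : X) (eps delta : R) : Rbar :=
  if excluded_middle_informative (dinterior (subdiff f x) dzero)
  then ddist0 (dboundary (subdiff f x))
  else Rbar_inf (fun r => exists u,
          Rbar_le (Finite (- eps * vnorm X (vsub u x) - delta)) (f u) /\
          r = ddist0 (subdiff f u)).

(* perturbation families.
   The condition  xi + |∂f|_bd - tau <= eps  is read as  xi + |∂f|_bd <= eps + tau. *)
Definition Ptb (f : X -> Rbar) (eps : R) (g : X -> Rbar) : Prop :=
  (exists y, Sf g y) /\
  exists p : X -> R, convex_real p /\ (forall u, g u = Rbar_addr (p u) (f u)) /\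
  exists x xi, Sf_eq f x /\ 0 <= xi /\
    Rbar_le (Rbar_addr xi (subdiff_bd f)) (Rbar_addr eps (tau f x xi (Rabs (p x)))) /\
    (forall u, Rabs (p u - p x) <= xi * vnorm X (vsub u x)).

Definition Ptb_w (f : X -> Rbar) (eps : R) (g : X -> Rbar) : Prop :=
  (exists y, Sf g y) /\
  exists p : X -> R, convex_real p /\ (forall u, g u = Rbar_addr (p u) (f u)) /\
  exists x, Sf_eq f x /\
    (forall u, Rabs (p u - p x) <= eps * vnorm X (vsub u x)).

Definition Ptb_l (f : X -> Rbar) (eps : R) (g : X -> Rbar) : Prop :=
  exists x xi xs, Sf_eq f x /\ 0 <= xi /\ is_dual xs /\ Rbar_le (dnorm xs) (Finite xi) /\
    Rbar_le (Rbar_addr xi (subdiff_bd f)) (Rbar_addr eps (tau f x xi 0)) /\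
    (forall u, g u = Rbar_addr (xs (vsub u x)) (f u)).

Definition Ptb_wl (f : X -> Rbar) (eps : R) (g : X -> Rbar) : Prop :=
  exists x xs, Sf_eq f x /\ is_dual xs /\ Rbar_le (dnorm xs) (Finite eps) /\
    (forall u, g u = Rbar_addr (xs (vsub u x)) (f u)).

Definition Er_fam (F : (X -> Rbar) -> Prop) : Rbar :=
  Rbar_inf (fun r => exists g, F g /\ r = Er g).

End Banach_defs.

(* The outer implications hold because the linear perturbations form subfamilies of the general ones.
   If [eps] exceeds [|df|_bd], a functional just outside [df(x)] next to a boundary point of small norm
   gives a linear perturbation whose sublevel set lies in a half-space far from a point where it is
   positive, so its error bound modulus is as small as we like.  If [eps < |df|_bd], a point violating
   the error bound of a perturbation [f + p] with a small modulus [m] is moved, by Ekeland's variational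
   principle, to a point [v] where [f + p + c || . - v ||] is minimal for some [c < m]; a Hahn-Banach
   argument turns this into a subgradient of [f] at [v] of norm at most [xi + c].  This bounds
   [tau(f, x, xi, |p x|)] by [xi + c] (using, when [0] is interior to [df(x)], that [df(x)] contains the
   ball of radius [d(0, bd df(x))]), which contradicts the inequality defining [Ptb(f, eps)]. *)

From Pilot Require Import Defs.
From Stdlib Require Import Reals Lra Lia Classical ClassicalEpsilon FunctionalExtensionality ProofIrrelevance.
From mathcomp Require classical_sets boolp.
Set Bullet Behavior "Strict Subproofs".
Open Scope R_scope.

(** * Extended reals *)

Lemma Rbar_le_trans x y z : Rbar_le x y -> Rbar_le y z -> Rbar_le x z.
Proof. destruct x, y, z; simpl; intros; auto; try lra; contradiction. Qed.

Lemma Rbar_lt_finite a b : Rbar_lt (Finite a) (Finite b) <-> a < b.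
Proof.
  unfold Rbar_lt; simpl; split.
  - intros [[Hlt | ->] Hne]; [exact Hlt | contradiction].
  - intros H; split; [lra | intro E; injection E; lra].
Qed.

Lemma Rbar_lt_le x y : Rbar_lt x y -> Rbar_le x y.
Proof. intros [H _]; exact H. Qed.

Lemma Rbar_not_le_lt x y : ~ Rbar_le x y -> Rbar_lt y x.
Proof.
  destruct x, y; unfold Rbar_lt; simpl; intros H; try tauto;
    try (split; [lra | intro E; injection E; lra]);
    split; auto; discriminate.
Qed.

Lemma Rbar_lt_not_le x y : Rbar_lt x y -> ~ Rbar_le y x.
Proof.
  destruct x, y; unfold Rbar_lt; simpl; intros [H1 H2] H3; try tauto.
  apply H2; f_equal; lra.
Qed.

Lemma Rbar_le_lt_trans x y z : Rbar_le x y -> Rbar_lt y z -> Rbar_lt x z.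
Proof.
  intros H1 H2. apply Rbar_not_le_lt. intro H3.
  apply (Rbar_lt_not_le _ _ H2). eapply Rbar_le_trans; eauto.
Qed.

Lemma Rbar_lt_le_trans x y z : Rbar_lt x y -> Rbar_le y z -> Rbar_lt x z.
Proof.
  intros H1 H2. apply Rbar_not_le_lt. intro H3.
  apply (Rbar_lt_not_le _ _ H1). eapply Rbar_le_trans; eauto.
Qed.

Lemma Rbar_lt_p_infty a : Rbar_lt (Finite a) p_infty.
Proof. split; [exact I | discriminate]. Qed.

Lemma Rbar_finite_between a y b : Rbar_le (Finite a) y -> Rbar_le y (Finite b) ->
  exists d, y = Finite d /\ a <= d <= b.
Proof. destruct y; simpl; intros; try contradiction. exists r; auto. Qed.

Definition is_rglb (E : R -> Prop) (i : R) : Prop :=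
  (forall e, E e -> i <= e) /\ (forall j, (forall e, E e -> j <= e) -> j <= i).

Definition rglb (E : R -> Prop) : R := epsilon (inhabits 0) (is_rglb E).

Lemma rglb_spec (E : R -> Prop) : (exists e, E e) -> (exists m, forall e, E e -> m <= e) ->
  is_rglb E (rglb E).
Proof.
  intros [e0 He0] [m Hm]. unfold rglb. apply epsilon_spec.
  assert (HB : bound (fun s => E (- s))). { exists (- m). intros s Hs. apply Hm in Hs. lra. }
  assert (HN : exists s, E (- s)). { exists (- e0). rewrite Ropp_involutive; auto. }
  destruct (completeness _ HB HN) as [s [H1 H2]].
  exists (- s). split.
  - intros e He. assert (-e <= s) by (apply H1; rewrite Ropp_involutive; auto). lra.
  - intros j Hj. assert (s <= - j) by (apply H2; intros t Ht; apply Hj in Ht; lra). lra.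
Qed.

Lemma rglb_le E e : (exists m, forall e, E e -> m <= e) -> E e -> rglb E <= e.
Proof. intros Hm He. apply (proj1 (rglb_spec E (ex_intro _ e He) Hm)); auto. Qed.

Lemma rglb_ge E j : (exists e, E e) -> (forall e, E e -> j <= e) -> j <= rglb E.
Proof. intros He Hj. apply (proj2 (rglb_spec E He (ex_intro _ j Hj))); auto. Qed.

Lemma rglb_approx E d : (exists e, E e) -> (exists m, forall e, E e -> m <= e) -> 0 < d ->
  exists e, E e /\ e < rglb E + d.
Proof.
  intros He Hm Hd. apply NNPP. intro H.
  assert (rglb E + d <= rglb E); [|lra].
  apply rglb_ge; auto. intros e Ee. apply Rnot_lt_le. intro H2. apply H. exists e; auto.
Qed.

Lemma is_glb_exists (E : Rbar -> Prop) : exists m, Defs.is_glb E m.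
Proof.
  destruct (classic (E m_infty)) as [Hm | Hm].
  { exists m_infty; split; intros; simpl; auto. }
  destruct (classic (exists r, E (Finite r))) as [[r0 Hr0] | Hne].
  2:{ exists p_infty. split; [|intros l _; destruct l; simpl; auto].
      intros [r| |] Hy; simpl; auto. apply Hne; exists r; exact Hy. }
  set (F := fun r => E (Finite r)).
  destruct (classic (exists b, forall r, F r -> b <= r)) as [Hb | Hnb].
  - pose proof (rglb_spec F (ex_intro _ r0 Hr0) Hb) as [H1 H2].
    exists (Finite (rglb F)). split.
    + intros [r| |] Hy; simpl; auto.
    + intros [a| |] Hl; simpl; auto.
      * apply H2. intros t Ht. apply (Hl _ Ht).
      * apply (Hl _ Hr0).
  - exists m_infty. split; [intros; simpl; auto|].
    intros [a| |] Hl; simpl; auto.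
    + apply Hnb. exists a. intros r Hr. apply (Hl _ Hr).
    + apply (Hl _ Hr0).
Qed.

Lemma is_lub_exists (E : Rbar -> Prop) : exists m, Defs.is_lub E m.
Proof.
  destruct (classic (E p_infty)) as [Hp | Hp].
  { exists p_infty; split; [intros [] _; simpl; auto | intros l Hl; apply (Hl _ Hp)]. }
  destruct (classic (exists r, E (Finite r))) as [[r0 Hr0] | Hne].
  2:{ exists m_infty. split; [|intros l _; destruct l; simpl; auto].
      intros [r| |] Hy; simpl; auto. apply Hne. exists r. exact Hy. }
  destruct (classic (exists b, forall r, E (Finite r) -> r <= b)) as [[b Hb] | Hnb].
  - assert (HB : bound (fun s => E (Finite s))) by (exists b; intros s Hs; apply Hb, Hs).
    destruct (completeness _ HB (ex_intro _ r0 Hr0)) as [s [Hs1 Hs2]].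
    exists (Finite s). split.
    + intros [r| |] Hy; simpl; auto.
    + intros [a| |] Hl; simpl; auto.
      * apply Hs2. intros t Ht. apply (Hl _ Ht).
      * apply (Hl _ Hr0).
  - exists p_infty. split; [intros [] _; simpl; auto|].
    intros [a| |] Hl; simpl; auto.
    + apply Hnb. exists a. intros r Hr. apply (Hl _ Hr).
    + apply (Hl _ Hr0).
Qed.

Lemma Rbar_inf_le (E : Rbar -> Prop) y : E y -> Rbar_le (Rbar_inf E) y.
Proof. apply (proj1 (epsilon_spec _ _ (is_glb_exists E))). Qed.

Lemma Rbar_le_inf (E : Rbar -> Prop) l : (forall y, E y -> Rbar_le l y) -> Rbar_le l (Rbar_inf E).
Proof. apply (proj2 (epsilon_spec _ _ (is_glb_exists E))). Qed.

Lemma Rbar_sup_ge (E : Rbar -> Prop) y : E y -> Rbar_le y (Rbar_sup E).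
Proof. apply (proj1 (epsilon_spec _ _ (is_lub_exists E))). Qed.

Lemma Rbar_sup_le (E : Rbar -> Prop) l : (forall y, E y -> Rbar_le y l) -> Rbar_le (Rbar_sup E) l.
Proof. apply (proj2 (epsilon_spec _ _ (is_lub_exists E))). Qed.

Lemma Rbar_inf_lt (E : Rbar -> Prop) l :
  ~ Rbar_le l (Rbar_inf E) -> exists y, E y /\ ~ Rbar_le l y.
Proof.
  intros H. apply NNPP. intro H'. apply H, Rbar_le_inf.
  intros y Hy. apply NNPP. intro H2. apply H'. exists y; auto.
Qed.

Lemma Rabs_le_between a b : Rabs a <= b -> - b <= a <= b.
Proof. intros H. pose proof (Rle_abs a). pose proof (Rle_abs (- a)). rewrite Rabs_Ropp in *. lra. Qed.

Definition Rbar_pos_part (y : Rbar) : Rbar :=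
  match y with Finite r => Finite (Rmax r 0) | p_infty => p_infty | m_infty => Finite 0 end.

Lemma Rbar_pos_part_nonneg y : Rbar_le (Finite 0) (Rbar_pos_part y).
Proof. destruct y; simpl; auto; [apply Rmax_r | lra]. Qed.

Lemma Rbar_lt_pos_part a y : 0 <= a -> Rbar_lt (Finite a) (Rbar_pos_part y) -> Rbar_lt (Finite a) y.
Proof.
  intros Ha. destruct y as [r| |]; simpl; auto.
  - rewrite !Rbar_lt_finite. unfold Rmax. destruct (Rle_dec r 0); lra.
  - rewrite Rbar_lt_finite. lra.
Qed.

Lemma Rbar_pos_part_lt a y : Rbar_lt (Finite a) y -> Rbar_lt (Finite a) (Rbar_pos_part y).
Proof.
  destruct y as [r| |]; simpl; auto.
  - rewrite !Rbar_lt_finite. pose proof (Rmax_l r 0). lra.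
  - intros [[] _].
Qed.

Lemma Rbar_lt_finite_dense a y : Rbar_lt (Finite a) y -> exists r, a < r /\ Rbar_lt (Finite r) y.
Proof.
  destruct y as [b| |]; intros H.
  - apply Rbar_lt_finite in H. exists ((a + b) / 2). split; [lra | apply Rbar_lt_finite; lra].
  - exists (a + 1). split; [lra | apply Rbar_lt_p_infty].
  - destruct H as [[] _].
Qed.

Lemma Rbar_le_zero_of_small_bounds y R0 : 0 < R0 ->
  (forall r, 0 < r -> r <= R0 -> Rbar_le y (Finite (2 * r))) -> Rbar_le y (Finite 0).
Proof.
  intros HR0 H. destruct y as [E| |]; simpl; auto.
  - apply Rle_plus_epsilon. intros d Hd.
    pose proof (H (Rmin R0 (d / 2)) (Rmin_pos R0 (d / 2) HR0 ltac:(lra)) (Rmin_l _ _)) as HE.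
    simpl in HE. pose proof (Rmin_r R0 (d / 2)). lra.
  - apply (H R0 HR0 (Rle_refl _)).
Qed.

(** * Normed spaces and their duals *)

Section Banach_space.
Context {X : Banach}.
Local Notation vadd := (vadd X).
Local Notation vscal := (vscal X).
Local Notation vopp := (vopp X).
Local Notation vzero := (vzero X).
Local Notation vnorm := (vnorm X).

Lemma vadd_zero_l (x : X) : vadd vzero x = x.
Proof. rewrite vadd_comm. apply vadd_zero. Qed.

Lemma vadd_cancel_l (a b c : X) : vadd a b = vadd a c -> b = c.
Proof.
  intros H. assert (H2 : vadd (vopp a) (vadd a b) = vadd (vopp a) (vadd a c)) by (rewrite H; auto).
  rewrite !vadd_assoc, (vadd_comm X (vopp a) a), vadd_opp, !vadd_zero_l in H2. exact H2.
Qed.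

Lemma vscal_zero (x : X) : vscal 0 x = vzero.
Proof.
  apply (vadd_cancel_l (vscal 0 x)). rewrite vadd_zero, <- vscal_distr_r.
  f_equal; ring.
Qed.

Lemma vscal_vzero (a : R) : vscal a vzero = vzero.
Proof. rewrite <- (vscal_zero vzero), vscal_assoc. f_equal; ring. Qed.

Lemma vopp_unique (x y : X) : vadd x y = vzero -> y = vopp x.
Proof. intros H. apply (vadd_cancel_l x). rewrite H, vadd_opp. reflexivity. Qed.

Lemma vscal_m1 (x : X) : vscal (-1) x = vopp x.
Proof.
  apply vopp_unique. rewrite <- (vscal_one X x) at 1. rewrite <- vscal_distr_r.
  replace (1 + -1) with 0 by ring. apply vscal_zero.
Qed.

Lemma vopp_scal a (x : X) : vopp (vscal a x) = vscal (- a) x.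
Proof. rewrite <- vscal_m1, vscal_assoc. f_equal; ring. Qed.

Lemma vopp_opp (x : X) : vopp (vopp x) = x.
Proof. rewrite <- !vscal_m1, vscal_assoc. replace (-1 * -1) with 1 by ring. apply vscal_one. Qed.

Lemma vopp_add (x y : X) : vopp (vadd x y) = vadd (vopp x) (vopp y).
Proof. rewrite <- !vscal_m1. apply vscal_distr_l. Qed.

Lemma vadd_swap (a b c d : X) : vadd (vadd a b) (vadd c d) = vadd (vadd a c) (vadd b d).
Proof. rewrite <- !vadd_assoc. f_equal. rewrite !vadd_assoc. f_equal. apply vadd_comm. Qed.

Lemma vnorm_zero : vnorm vzero = 0.
Proof. rewrite <- (vscal_zero vzero), vnorm_scal, Rabs_R0. ring. Qed.

Lemma vnorm_opp (x : X) : vnorm (vopp x) = vnorm x.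
Proof. rewrite <- vscal_m1, vnorm_scal. replace (Rabs (-1)) with 1 by (rewrite Rabs_left; lra). ring. Qed.

Lemma vnorm_nonneg (x : X) : 0 <= vnorm x.
Proof.
  pose proof (vnorm_triangle X x (vopp x)) as H.
  rewrite vadd_opp, vnorm_zero, vnorm_opp in H. lra.
Qed.

Lemma vsub_self (x : X) : vsub x x = vzero.
Proof. apply vadd_opp. Qed.

Lemma vsub_zero (x : X) : vsub x vzero = x.
Proof. unfold vsub. rewrite <- vscal_m1, vscal_vzero. apply vadd_zero. Qed.

Lemma vsub_swap (x y : X) : vsub y x = vopp (vsub x y).
Proof. unfold vsub. rewrite vopp_add, vopp_opp. apply vadd_comm. Qed.

Lemma vnorm_sub_sym (x y : X) : vnorm (vsub x y) = vnorm (vsub y x).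
Proof. rewrite vsub_swap, vnorm_opp. reflexivity. Qed.

Lemma vsub_sub_r (w v : X) : vsub w (vsub w v) = v.
Proof. unfold vsub. rewrite vopp_add, vopp_opp, vadd_assoc, vadd_opp, vadd_zero_l. reflexivity. Qed.

Lemma vsub_add_l (v y : X) : vsub (vadd v y) v = y.
Proof. unfold vsub. rewrite (vadd_comm X v y), <- vadd_assoc, vadd_opp, vadd_zero. reflexivity. Qed.

Lemma vsub_sub_l (w h : X) : vsub (vsub w h) w = vopp h.
Proof. unfold vsub. rewrite (vadd_comm X w (vopp h)), <- vadd_assoc, vadd_opp, vadd_zero. reflexivity. Qed.

Lemma vnorm_sub_eq0 (x y : X) : vnorm (vsub x y) = 0 -> x = y.
Proof.
  intros H. apply vnorm_eq0, vopp_unique in H.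
  rewrite <- (vopp_opp x), <- (vopp_opp y). f_equal. symmetry. exact H.
Qed.

Lemma vnorm_sub_triangle (x y z : X) : vnorm (vsub x z) <= vnorm (vsub x y) + vnorm (vsub y z).
Proof.
  replace (vsub x z) with (vadd (vsub x y) (vsub y z)) by
    (unfold vsub; rewrite <- vadd_assoc, (vadd_assoc X (vopp y)), (vadd_comm X (vopp y) y),
       vadd_opp, vadd_zero_l; reflexivity).
  apply vnorm_triangle.
Qed.

Lemma vsub_scal t (a b : X) : vscal t (vsub a b) = vsub (vscal t a) (vscal t b).
Proof. unfold vsub. rewrite vscal_distr_l, !vopp_scal, <- vscal_m1, vscal_assoc. do 3 f_equal. ring. Qed.

Lemma vsub_comb t s (a b c d : X) :
  vsub (vadd (vscal t a) (vscal s b)) (vadd (vscal t c) (vscal s d)) =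
  vadd (vscal t (vsub a c)) (vscal s (vsub b d)).
Proof. rewrite !vsub_scal. unfold vsub. rewrite vopp_add. apply vadd_swap. Qed.

Lemma vcomb_same t (v : X) : vadd (vscal t v) (vscal (1 - t) v) = v.
Proof. rewrite <- vscal_distr_r. replace (t + (1 - t)) with 1 by ring. apply vscal_one. Qed.

Lemma vsub_comb_r t (w v : X) : vsub (vadd (vscal t w) (vscal (1 - t) v)) v = vscal t (vsub w v).
Proof.
  rewrite <- (vcomb_same t v) at 2. rewrite vsub_comb, vsub_self, vscal_vzero. apply vadd_zero.
Qed.

Lemma vnorm_sub_comb_r t (w v : X) : 0 <= t ->
  vnorm (vsub (vadd (vscal t w) (vscal (1 - t) v)) v) = t * vnorm (vsub w v).
Proof. intros Ht. rewrite vsub_comb_r, vnorm_scal, Rabs_right; lra. Qed.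

Lemma vnorm_sub_comb_le t (z1 z2 v : X) : 0 <= t <= 1 ->
  vnorm (vsub (vadd (vscal t z1) (vscal (1 - t) z2)) v) <=
  t * vnorm (vsub z1 v) + (1 - t) * vnorm (vsub z2 v).
Proof.
  intros Ht. rewrite <- (vcomb_same t v) at 1. rewrite vsub_comb.
  eapply Rle_trans; [apply vnorm_triangle|]. rewrite !vnorm_scal, !Rabs_right by lra. lra.
Qed.

Lemma vcomb_comb s t (w v : X) :
  vadd (vscal s (vadd (vscal t w) (vscal (1 - t) v))) (vscal (1 - s) v) =
  vadd (vscal (s * t) w) (vscal (1 - s * t) v).
Proof.
  rewrite vscal_distr_l, !vscal_assoc, <- vadd_assoc, <- vscal_distr_r.
  f_equal. f_equal. ring.
Qed.

Lemma dual_add (phi : X -> R) : is_dual phi -> forall a b, phi (vadd a b) = phi a + phi b.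
Proof. intros [H _]; exact H. Qed.

Lemma dual_scal (phi : X -> R) : is_dual phi -> forall t a, phi (vscal t a) = t * phi a.
Proof. intros [_ [H _]]; exact H. Qed.

Lemma dual_zero (phi : X -> R) : is_dual phi -> phi vzero = 0.
Proof. intros H. rewrite <- (vscal_zero vzero), (dual_scal _ H). ring. Qed.

Lemma dual_opp (phi : X -> R) : is_dual phi -> forall a, phi (vopp a) = - phi a.
Proof. intros H a. rewrite <- vscal_m1, (dual_scal _ H). ring. Qed.

Lemma dual_sub (phi : X -> R) : is_dual phi -> forall a b, phi (vsub a b) = phi a - phi b.
Proof. intros H a b. unfold vsub. rewrite (dual_add _ H), (dual_opp _ H). ring. Qed.

Lemma dual_self_zero (phi : X -> R) x : is_dual phi -> phi (vsub x x) = 0.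
Proof. intros H. rewrite vsub_self. apply dual_zero, H. Qed.

Lemma dnorm_le_of_bound (phi : X -> R) M :
  0 <= M -> (forall h, Rabs (phi h) <= M * vnorm h) -> Rbar_le (dnorm phi) (Finite M).
Proof.
  intros HM H. apply Rbar_sup_le. intros y [x [Hx ->]]. simpl.
  eapply Rle_trans; [apply H|]. pose proof (vnorm_nonneg x). nra.
Qed.

Lemma dnorm_ge0 (phi : X -> R) : is_dual phi -> Rbar_le (Finite 0) (dnorm phi).
Proof.
  intros H. apply (Rbar_le_trans _ (Finite (Rabs (phi vzero)))).
  - rewrite (dual_zero _ H), Rabs_R0. simpl; lra.
  - apply Rbar_sup_ge. exists vzero. split; auto. rewrite vnorm_zero; lra.
Qed.

Lemma dnorm_bound (phi : X -> R) M : is_dual phi -> Rbar_le (dnorm phi) (Finite M) ->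
  forall h, Rabs (phi h) <= M * vnorm h.
Proof.
  intros Hd HM h. destruct (vnorm_nonneg h) as [Hp | H0].
  - assert (Hinv : 0 < / vnorm h) by (apply Rinv_0_lt_compat; lra).
    assert (Hle : Rbar_le (Finite (Rabs (phi (vscal (/ vnorm h) h)))) (Finite M)).
    { eapply Rbar_le_trans; [|exact HM]. apply Rbar_sup_ge. eexists. split; [|reflexivity].
      rewrite vnorm_scal, Rabs_right by lra. right; field; lra. }
    simpl in Hle. rewrite (dual_scal _ Hd), Rabs_mult, Rabs_right in Hle by lra.
    apply (Rmult_le_compat_l (vnorm h)) in Hle; [|lra].
    replace (vnorm h * (/ vnorm h * Rabs (phi h))) with (Rabs (phi h)) in Hle by (field; lra). lra.
  - symmetry in H0. apply vnorm_eq0 in H0. rewrite H0, (dual_zero _ Hd), vnorm_zero, Rabs_R0. lra.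
Qed.

Lemma dnorm_finite (phi : X -> R) : is_dual phi ->
  exists n, dnorm phi = Finite n /\ 0 <= n /\ forall h, Rabs (phi h) <= n * vnorm h.
Proof.
  intros Hd. destruct Hd as [H1 [H2 [M HM]]].
  assert (Hd : is_dual phi) by (split; [|split]; eauto).
  assert (HU : Rbar_le (dnorm phi) (Finite (Rmax M 0))).
  { apply dnorm_le_of_bound; [apply Rmax_r|]. intros h. eapply Rle_trans; [apply HM|].
    apply Rmult_le_compat_r; [apply vnorm_nonneg | apply Rmax_l]. }
  destruct (Rbar_finite_between _ _ _ (dnorm_ge0 _ Hd) HU) as [n [Hn1 Hn2]].
  exists n. split; auto. split; [lra|]. apply dnorm_bound; auto. rewrite Hn1. simpl; lra.
Qed.

Lemma dnorm_lt_of_bound (phi : X -> R) M r :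
  0 <= M -> M < r -> (forall h, Rabs (phi h) <= M * vnorm h) -> Rbar_lt (dnorm phi) (Finite r).
Proof.
  intros HM Hr H. eapply Rbar_le_lt_trans; [apply dnorm_le_of_bound; eauto|].
  apply Rbar_lt_finite; auto.
Qed.

Lemma is_dual_comb (phi psi : X -> R) a b : is_dual phi -> is_dual psi ->
  is_dual (fun h => a * phi h + b * psi h).
Proof.
  intros H1 H2. destruct (dnorm_finite _ H1) as [n1 [_ [Hn1 B1]]].
  destruct (dnorm_finite _ H2) as [n2 [_ [Hn2 B2]]].
  split; [|split].
  - intros. rewrite (dual_add _ H1), (dual_add _ H2). ring.
  - intros. rewrite (dual_scal _ H1), (dual_scal _ H2). ring.
  - exists (Rabs a * n1 + Rabs b * n2). intros h.
    eapply Rle_trans; [apply Rabs_triang|]. rewrite !Rabs_mult.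
    pose proof (B1 h); pose proof (B2 h). pose proof (Rabs_pos a); pose proof (Rabs_pos b).
    pose proof (vnorm_nonneg h). nra.
Qed.

Lemma is_dual_scal (phi : X -> R) a : is_dual phi -> is_dual (fun h => a * phi h).
Proof.
  intros H. replace (fun h => a * phi h) with (fun h => a * phi h + 0 * phi h)
    by (apply functional_extensionality; intros; ring).
  apply is_dual_comb; auto.
Qed.

Lemma is_dual_dsub (phi psi : X -> R) : is_dual phi -> is_dual psi -> is_dual (dsub phi psi).
Proof.
  intros H1 H2. replace (dsub phi psi) with (fun h => 1 * phi h + (-1) * psi h)
    by (apply functional_extensionality; intros; unfold dsub; ring).
  apply is_dual_comb; auto.
Qed.

Lemma is_dual_zero : is_dual (@dzero X).
Proof.
  unfold dzero. split; [|split]; intros; try ring.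
  exists 0. intros. rewrite Rabs_R0. lra.
Qed.

(** * Hahn-Banach *)

Lemma zorn_maximal (T : Type) (Rl : T -> T -> Prop) :
  (forall t, Rl t t) -> (forall r s t, Rl r s -> Rl s t -> Rl r t) ->
  (forall s t, Rl s t -> Rl t s -> s = t) ->
  (forall A : T -> Prop, (forall s t, A s -> A t -> Rl s t \/ Rl t s) ->
      exists t, forall s, A s -> Rl s t) ->
  exists t, forall s, Rl t s -> s = t.
Proof.
  intros Hrefl Htrans Hanti Hchain.
  assert (E : forall s t, Rl s t <-> is_true (boolp.asbool (Rl s t)))
    by (intros s t; split; [apply ssrbool.introT | apply ssrbool.elimT]; apply boolp.asboolP).
  destruct (@classical_sets.Zorn T (fun s t => boolp.asbool (Rl s t))) as [t Ht].
  - intros t. apply E, Hrefl.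
  - intros r s t Hrs Hst. apply E. apply (Htrans r s t); apply E; assumption.
  - intros s t Hst Hts. apply Hanti; apply E; assumption.
  - intros A HA. destruct (Hchain A) as [t Ht].
    + intros s t Hs Ht. destruct (HA s t Hs Ht) as [H | H]; [left | right]; apply E, H.
    + exists t. intros s Hs. apply E, Ht, Hs.
  - exists t. intros s Hs. apply Ht, E, Hs.
Qed.

Definition sublinear (q : X -> R) : Prop :=
  (forall a b, q (vadd a b) <= q a + q b) /\ (forall t a, 0 < t -> q (vscal t a) = t * q a).

Definition linear (l : X -> R) : Prop :=
  (forall a b, l (vadd a b) = l a + l b) /\ (forall t a, l (vscal t a) = t * l a).

Lemma sublinear_zero q : sublinear q -> q vzero = 0.
Proof. intros [_ H]. pose proof (H 2 vzero ltac:(lra)) as E. rewrite vscal_vzero in E. lra. Qed.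

Lemma sublinear_scal q : sublinear q -> forall t a, 0 <= t -> q (vscal t a) = t * q a.
Proof.
  intros Hq t a [Ht | <-]; [apply (proj2 Hq); auto|].
  rewrite vscal_zero, sublinear_zero; auto; ring.
Qed.

Lemma sublinear_opp_le q : sublinear q -> forall h, - q (vopp h) <= q h.
Proof. intros Hq h. pose proof (proj1 Hq h (vopp h)) as E. rewrite vadd_opp, sublinear_zero in E; auto. lra. Qed.

Lemma sublinear_chain_inf (A : (X -> R) -> Prop) s0 :
  (forall s, A s -> sublinear s) ->
  (forall s t, A s -> A t -> (forall h, t h <= s h) \/ (forall h, s h <= t h)) -> A s0 ->
  exists m, sublinear m /\ forall s h, A s -> m h <= s h.
Proof.
  intros Hsub Hchain Hs0.
  set (E := fun h y => exists s, A s /\ y = s h).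
  assert (Ene : forall h, exists y, E h y) by (intros h; exists (s0 h), s0; auto).
  assert (Ebd : forall h, exists m, forall y, E h y -> m <= y).
  { intros h. exists (- s0 (vopp h)). intros y [s [Hs ->]].
    pose proof (sublinear_opp_le s (Hsub s Hs) h). pose proof (sublinear_opp_le s0 (Hsub s0 Hs0) h).
    destruct (Hchain s s0 Hs Hs0) as [G | G]; pose proof (G h); pose proof (G (vopp h)); lra. }
  assert (Hlow : forall s h, A s -> rglb (E h) <= s h) by (intros s h Hs; apply rglb_le; [|exists s]; auto).
  assert (Happ : forall h d, 0 < d -> exists s, A s /\ s h < rglb (E h) + d).
  { intros h d Hd. destruct (rglb_approx _ d (Ene h) (Ebd h) Hd) as [y [[s [Hs ->]] Hy]]. eauto. }
  exists (fun h => rglb (E h)). split; [split|]; auto.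
  - intros a b. apply Rle_plus_epsilon. intros d Hd.
    destruct (Happ a (d / 2) ltac:(lra)) as [s1 [Hs1 E1]].
    destruct (Happ b (d / 2) ltac:(lra)) as [s2 [Hs2 E2]].
    (* the chain is totally ordered, so one of [s1], [s2] is below both *)
    assert (exists s, A s /\ s a <= s1 a /\ s b <= s2 b) as [s [Hs [F1 F2]]].
    { destruct (Hchain s1 s2 Hs1 Hs2) as [G | G].
      - exists s2. split; auto. split; [apply G | lra].
      - exists s1. split; auto. split; [lra | apply G]. }
    pose proof (Hlow s (vadd a b) Hs). pose proof (proj1 (Hsub s Hs) a b). lra.
  - intros t a Ht. apply Rle_antisym.
    + apply Rle_plus_epsilon. intros d Hd.
      destruct (Happ a (d / t) ltac:(apply Rdiv_lt_0_compat; lra)) as [s [Hs E1]].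
      pose proof (Hlow s (vscal t a) Hs) as E2. rewrite (proj2 (Hsub s Hs) t a Ht) in E2.
      apply (Rmult_lt_compat_l t) in E1; auto.
      replace (t * (rglb (E a) + d / t)) with (t * rglb (E a) + d) in E1 by (field; lra). lra.
    + apply rglb_ge; auto. intros y [s [Hs ->]]. pose proof (Hlow s a Hs).
      rewrite (proj2 (Hsub s Hs) t a Ht). nra.
Qed.

(* [p_a h = inf_(tau >= 0) p (h + tau a) - tau p a] lies below [p]; for a minimal [p] the two
   coincide, which is the superadditivity [p h + p a <= p (h + a)]. *)
Lemma sublinear_directional_inf p a : sublinear p ->
  exists pa, sublinear pa /\ (forall h, pa h <= p h) /\ forall h, pa h <= p (vadd h a) - p a.
Proof.
  intros Hp.
  set (E := fun h y => exists tau, 0 <= tau /\ y = p (vadd h (vscal tau a)) - tau * p a).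
  assert (Ene : forall h, exists y, E h y) by (intros h; eexists; exists 0; split; [lra | reflexivity]).
  assert (Ebd : forall h, exists m, forall y, E h y -> m <= y).
  { intros h. exists (- p (vopp h)). intros y [tau [Htau ->]].
    pose proof (proj1 Hp (vadd h (vscal tau a)) (vopp h)) as E1.
    replace (vadd (vadd h (vscal tau a)) (vopp h)) with (vscal tau a) in E1
      by (rewrite (vadd_comm X h), <- vadd_assoc, vadd_opp, vadd_zero; reflexivity).
    rewrite sublinear_scal in E1; auto. lra. }
  assert (Hlow : forall h tau, 0 <= tau -> rglb (E h) <= p (vadd h (vscal tau a)) - tau * p a)
    by (intros h tau Ht; apply rglb_le; [|exists tau]; auto).
  assert (Happ : forall h d, 0 < d ->
            exists tau, 0 <= tau /\ p (vadd h (vscal tau a)) - tau * p a < rglb (E h) + d).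
  { intros h d Hd. destruct (rglb_approx _ d (Ene h) (Ebd h) Hd) as [y [[tau [Ht ->]] Hy]]. eauto. }
  exists (fun h => rglb (E h)). split; [split | split].
  - intros b c. apply Rle_plus_epsilon. intros d Hd.
    destruct (Happ b (d / 2) ltac:(lra)) as [t1 [Ht1 E1]].
    destruct (Happ c (d / 2) ltac:(lra)) as [t2 [Ht2 E2]].
    pose proof (Hlow (vadd b c) (t1 + t2) ltac:(lra)) as E3.
    pose proof (proj1 Hp (vadd b (vscal t1 a)) (vadd c (vscal t2 a))) as E4.
    rewrite vadd_swap, <- vscal_distr_r in E4. lra.
  - intros t b Ht. apply Rle_antisym.
    + apply Rle_plus_epsilon. intros d Hd.
      destruct (Happ b (d / t) ltac:(apply Rdiv_lt_0_compat; lra)) as [tau [Htau E1]].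
      pose proof (Hlow (vscal t b) (t * tau) ltac:(nra)) as E2.
      rewrite <- vscal_assoc, <- vscal_distr_l, (proj2 Hp t _ Ht) in E2.
      apply (Rmult_lt_compat_l t) in E1; auto.
      replace (t * (rglb (E b) + d / t)) with (t * rglb (E b) + d) in E1 by (field; lra). nra.
    + apply rglb_ge; auto. intros y [tau [Htau ->]].
      assert (Htt : 0 <= tau / t) by (apply Rmult_le_pos; [lra | left; apply Rinv_0_lt_compat; lra]).
      pose proof (Hlow b (tau / t) Htt) as E1.
      replace (vadd (vscal t b) (vscal tau a)) with (vscal t (vadd b (vscal (tau / t) a)))
        by (rewrite vscal_distr_l, vscal_assoc; do 3 f_equal; field; lra).
      rewrite (proj2 Hp t _ Ht).
      apply (Rmult_le_compat_l t) in E1; [|lra].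
      replace (t * (p (vadd b (vscal (tau / t) a)) - tau / t * p a))
        with (t * p (vadd b (vscal (tau / t) a)) - tau * p a) in E1 by (field; lra). lra.
  - intros h. pose proof (Hlow h 0 (Rle_refl _)) as E1. rewrite vscal_zero, vadd_zero in E1. lra.
  - intros h. pose proof (Hlow h 1 ltac:(lra)) as E1. rewrite vscal_one in E1. lra.
Qed.

Lemma minimal_sublinear_linear p : sublinear p ->
  (forall r, sublinear r -> (forall h, r h <= p h) -> r = p) -> linear p.
Proof.
  intros Hp Hmin.
  assert (Hadd : forall a b, p (vadd a b) = p a + p b).
  { intros a b. destruct (sublinear_directional_inf p b Hp) as [pb [Hpb [Hle Hdir]]].
    rewrite (Hmin pb Hpb Hle) in Hdir. pose proof (Hdir a). pose proof (proj1 Hp a b). lra. }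
  split; auto. intros t a. destruct (Rle_or_lt 0 t) as [Ht | Ht].
  - apply sublinear_scal; auto.
  - assert (Hopp : p (vopp (vscal (- t) a)) = - p (vscal (- t) a)).
    { pose proof (Hadd (vscal (- t) a) (vopp (vscal (- t) a))) as E.
      rewrite vadd_opp, sublinear_zero in E; auto. lra. }
    rewrite vopp_scal, Ropp_involutive, (sublinear_scal p Hp (- t) a) in Hopp by lra. lra.
Qed.

Lemma hahn_banach_sublinear (q : X -> R) : sublinear q -> exists l, linear l /\ forall h, l h <= q h.
Proof.
  intros Hq.
  set (T := {p : X -> R | sublinear p /\ forall h, p h <= q h}).
  set (Rl := fun (s t : T) => forall h, proj1_sig t h <= proj1_sig s h).
  destruct (zorn_maximal T Rl) as [[p [Hp Hpq]] Hmax].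
  - intros t h; lra.
  - intros r s t H1 H2 h. specialize (H1 h); specialize (H2 h); lra.
  - intros [s Hs] [t Ht] H1 H2. unfold Rl in *; simpl in *.
    assert (s = t) as <- by (apply functional_extensionality; intros h; specialize (H1 h); specialize (H2 h); lra).
    f_equal. apply proof_irrelevance.
  - intros A HA. destruct (classic (exists s, A s)) as [[s0 Hs0] | Hne].
    2:{ exists (exist _ q (conj Hq (fun h => Rle_refl _))). intros s Hs. exfalso. eauto. }
    destruct (sublinear_chain_inf (fun f => exists s, A s /\ proj1_sig s = f) (proj1_sig s0))
      as [m [Hm Hlow]].
    + intros f [s [_ <-]]. exact (proj1 (proj2_sig s)).
    + intros f g [s [Hs <-]] [t [Ht <-]]. apply HA; auto.
    + exists s0; auto.
    + assert (Hmq : forall h, m h <= q h).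
      { intros h. pose proof (Hlow _ h (ex_intro _ s0 (conj Hs0 eq_refl))).
        pose proof (proj2 (proj2_sig s0) h). lra. }
      exists (exist _ m (conj Hm Hmq)). intros s Hs h. apply Hlow. eauto.
  - exists p. split; auto. apply minimal_sublinear_linear; auto.
    intros r Hr Hle. assert (Hrq : forall h, r h <= q h) by (intros h; pose proof (Hle h); pose proof (Hpq h); lra).
    apply (f_equal (@proj1_sig _ _) (Hmax (exist _ r (conj Hr Hrq)) Hle)).
Qed.

(* Every convex [Psi] with [Psi 0 = 0] dominates its recession slope [inf_(t > 0) Psi (t h) / t],
   which is sublinear. *)
Definition slope_inf (Psi : X -> R) (h : X) : R :=
  rglb (fun y => exists t, 0 < t /\ y = Psi (vscal t h) / t).

Section Slope.
Variable Psi : X -> R.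
Hypothesis Psi_convex : convex_real Psi.
Hypothesis Psi_zero : Psi vzero = 0.

Lemma convex_slope_lower_bound t h : 0 < t -> - Psi (vopp h) <= Psi (vscal t h) / t.
Proof.
  intros Ht. set (s := / (1 + t)).
  assert (Hs : 0 <= s <= 1).
  { unfold s. split; [left; apply Rinv_0_lt_compat; lra|].
    rewrite <- Rinv_1. apply Rinv_le_contravar; lra. }
  pose proof (Psi_convex (vscal t h) (vopp h) s Hs) as E.
  replace (vadd (vscal s (vscal t h)) (vscal (1 - s) (vopp h))) with vzero in E.
  2:{ rewrite <- vscal_m1, !vscal_assoc, <- vscal_distr_r.
      replace (s * t + (1 - s) * -1) with 0 by (unfold s; field; lra). rewrite vscal_zero; reflexivity. }
  rewrite Psi_zero in E. apply (Rmult_le_compat_l (1 + t)) in E; [|lra].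
  replace ((1 + t) * (s * Psi (vscal t h) + (1 - s) * Psi (vopp h))) with
    (Psi (vscal t h) + t * Psi (vopp h)) in E by (unfold s; field; lra).
  apply (Rmult_le_reg_l t); auto. replace (t * (Psi (vscal t h) / t)) with (Psi (vscal t h)) by (field; lra).
  lra.
Qed.

Lemma slope_inf_le h t : 0 < t -> slope_inf Psi h <= Psi (vscal t h) / t.
Proof.
  intros Ht. apply rglb_le; [|exists t; auto].
  exists (- Psi (vopp h)). intros e [s [Hs ->]]. apply convex_slope_lower_bound; auto.
Qed.

Lemma slope_inf_approx h d : 0 < d -> exists t, 0 < t /\ Psi (vscal t h) / t < slope_inf Psi h + d.
Proof.
  intros Hd. destruct (rglb_approx (fun y => exists t, 0 < t /\ y = Psi (vscal t h) / t) d)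
    as [e [[t [Ht ->]] He]].
  - eexists; exists 1; split; [lra | reflexivity].
  - exists (- Psi (vopp h)). intros e [s [Hs ->]]. apply convex_slope_lower_bound; auto.
  - exact Hd.
  - exists t; auto.
Qed.

Lemma slope_inf_subadditive a b : slope_inf Psi (vadd a b) <= slope_inf Psi a + slope_inf Psi b.
Proof.
  apply Rle_plus_epsilon. intros d Hd.
  destruct (slope_inf_approx a (d / 2) ltac:(lra)) as [t1 [Ht1 E1]].
  destruct (slope_inf_approx b (d / 2) ltac:(lra)) as [t2 [Ht2 E2]].
  (* [t (a + b)] is the convex combination of [t1 a] and [t2 b] with weight [la] *)
  set (t := t1 * t2 / (t1 + t2)). set (la := t2 / (t1 + t2)).
  assert (Ht : 0 < t) by (unfold t; apply Rdiv_lt_0_compat; nra).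
  assert (Hla : 0 <= la <= 1).
  { unfold la. split; [left; apply Rdiv_lt_0_compat; lra|].
    apply (Rmult_le_reg_r (t1 + t2)); [lra|]. replace (t2 / (t1 + t2) * (t1 + t2)) with t2 by (field; lra). lra. }
  pose proof (slope_inf_le (vadd a b) t Ht) as E3.
  pose proof (Psi_convex (vscal t1 a) (vscal t2 b) la Hla) as E4.
  replace (vadd (vscal la (vscal t1 a)) (vscal (1 - la) (vscal t2 b))) with (vscal t (vadd a b)) in E4
    by (rewrite vscal_distr_l, !vscal_assoc; unfold t, la; f_equal; f_equal; field; lra).
  assert (Psi (vscal t (vadd a b)) / t <= Psi (vscal t1 a) / t1 + Psi (vscal t2 b) / t2).
  { unfold Rdiv at 1. apply (Rle_trans _ ((la * Psi (vscal t1 a) + (1 - la) * Psi (vscal t2 b)) * / t)).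
    - apply Rmult_le_compat_r; auto. left; apply Rinv_0_lt_compat; auto.
    - right. unfold la, t. field. lra. }
  lra.
Qed.

Lemma slope_inf_homogeneous r h : 0 < r -> slope_inf Psi (vscal r h) = r * slope_inf Psi h.
Proof.
  intros Hr. apply Rle_antisym.
  - apply Rle_plus_epsilon. intros d Hd.
    destruct (slope_inf_approx h (d / r) ltac:(apply Rdiv_lt_0_compat; lra)) as [t [Ht E]].
    pose proof (slope_inf_le (vscal r h) (t / r) ltac:(apply Rdiv_lt_0_compat; lra)) as E2.
    rewrite vscal_assoc in E2. replace (t / r * r) with t in E2 by (field; lra).
    replace (Psi (vscal t h) / (t / r)) with (r * (Psi (vscal t h) / t)) in E2 by (field; lra).
    apply (Rmult_lt_compat_l r) in E; auto.
    replace (r * (slope_inf Psi h + d / r)) with (r * slope_inf Psi h + d) in E by (field; lra). lra.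
  - apply rglb_ge; [eexists; exists 1; split; [lra | reflexivity]|].
    intros e [t [Ht ->]].
    pose proof (slope_inf_le h (t * r) ltac:(nra)) as E. rewrite vscal_assoc.
    apply (Rmult_le_compat_l r) in E; [|lra].
    replace (r * (Psi (vscal (t * r) h) / (t * r))) with (Psi (vscal (t * r) h) / t) in E by (field; lra).
    lra.
Qed.

Lemma convex_dominated_linear : exists l, linear l /\ forall h, l h <= Psi h.
Proof.
  destruct (hahn_banach_sublinear (slope_inf Psi)) as [l [Hl Hlq]].
  { split; [apply slope_inf_subadditive | intros; apply slope_inf_homogeneous; auto]. }
  exists l. split; auto. intros h. eapply Rle_trans; [apply Hlq|].
  pose proof (slope_inf_le h 1 ltac:(lra)) as E. rewrite vscal_one, Rdiv_1_r in E. exact E.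
Qed.

End Slope.

Lemma linear_bounded_dual (l : X -> R) M : linear l -> 0 <= M ->
  (forall y, l y <= M * vnorm y) -> is_dual l /\ Rbar_le (dnorm l) (Finite M).
Proof.
  intros [Ha Hs] HM Hup.
  assert (Hb : forall y, Rabs (l y) <= M * vnorm y).
  { intros y. pose proof (Hup (vopp y)) as E. rewrite <- vscal_m1, Hs, vnorm_scal in E.
    replace (Rabs (-1)) with 1 in E by (rewrite Rabs_left; lra). apply Rabs_le. pose proof (Hup y). lra. }
  split; [split; [|split]; eauto | apply dnorm_le_of_bound; auto].
Qed.

Lemma norming_functional (h : X) :
  exists l, is_dual l /\ Rbar_le (dnorm l) (Finite 1) /\ l h = vnorm h.
Proof.
  set (Psi := fun y => vnorm (vadd y h) - vnorm h).
  assert (Hc : convex_real Psi).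
  { intros a b t Ht. unfold Psi.
    rewrite <- (vcomb_same t h) at 1.
    rewrite vadd_swap, <- !vscal_distr_l.
    pose proof (vnorm_triangle X (vscal t (vadd a h)) (vscal (1 - t) (vadd b h))) as T.
    rewrite !vnorm_scal, !Rabs_right in T by lra. lra. }
  assert (H0 : Psi vzero = 0) by (unfold Psi; rewrite vadd_zero_l; ring).
  destruct (convex_dominated_linear Psi Hc H0) as [l [Hl Hle]].
  destruct (linear_bounded_dual l 1 Hl ltac:(lra)) as [Hd Hn].
  { intros z. rewrite Rmult_1_l. eapply Rle_trans; [apply Hle|]. unfold Psi.
    pose proof (vnorm_triangle X z h). lra. }
  exists l. split; [|split]; auto.
  apply Rle_antisym.
  - pose proof (dnorm_bound l 1 Hd Hn h). pose proof (Rle_abs (l h)). lra.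
  - pose proof (Hle (vopp h)) as E. unfold Psi in E.
    rewrite (vadd_comm X (vopp h)), vadd_opp, vnorm_zero, (dual_opp _ Hd) in E. lra.
Qed.

(** * Ekeland's variational principle *)

Definition inv_succ (n : nat) : R := / (INR n + 1).

Lemma inv_succ_pos n : 0 < inv_succ n.
Proof. unfold inv_succ. apply Rinv_0_lt_compat. pose proof (pos_INR n). lra. Qed.

Lemma inv_succ_small r : 0 < r -> exists n, inv_succ n < r.
Proof.
  intros Hr. destruct (archimed_cor1 r Hr) as [N [HN HN0]]. exists N. unfold inv_succ.
  eapply Rle_lt_trans; [|exact HN]. apply Rinv_le_contravar; [apply lt_0_INR; auto | lra].
Qed.

Definition lipschitz (p : X -> R) (L : R) : Prop :=
  forall a b, Rabs (p a - p b) <= L * vnorm (vsub a b).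

(* Extrapolate along the ray from [v] through [w]: [w] is the convex combination [s z + (1 - s) v]
   of [v] and [z = t w + (1 - t) v] for [s = 1 / t], and [p z] is controlled by the Lipschitz bound at [x]. *)
Lemma convex_lipschitz_at (p : X -> R) (x : X) xi : 0 <= xi -> convex_real p ->
  (forall u, Rabs (p u - p x) <= xi * vnorm (vsub u x)) -> lipschitz p xi.
Proof.
  intros Hxi Hc Hx.
  assert (One : forall v w, p w - p v <= xi * vnorm (vsub w v)).
  { intros v w. set (C := p x + xi * vnorm (vsub v x) - p v).
    assert (HC : 0 <= C) by (pose proof (Rabs_le_between _ _ (Hx v)); unfold C; lra).
    assert (Ht : forall t, 1 <= t -> t * (p w - p v) <= C + t * xi * vnorm (vsub w v)).
    { intros t Ht. set (z := vadd (vscal t w) (vscal (1 - t) v)).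
      assert (Hs : 0 <= / t <= 1).
      { split; [left; apply Rinv_0_lt_compat; lra|]. rewrite <- Rinv_1. apply Rinv_le_contravar; lra. }
      pose proof (Hc z v (/ t) Hs) as E.
      unfold z in E. rewrite vcomb_comb, Rinv_l, Rminus_diag, vscal_one, vscal_zero, vadd_zero in E by lra.
      fold z in E.
      pose proof (Rabs_le_between _ _ (Hx z)) as E1.
      pose proof (vnorm_sub_triangle z v x) as E2.
      unfold z in E2. rewrite vnorm_sub_comb_r in E2 by lra. fold z in E2.
      apply (Rmult_le_compat_l t) in E; [|lra].
      replace (t * (/ t * p z + (1 - / t) * p v)) with (p z + (t - 1) * p v) in E by (field; lra).
      unfold C. nra. }
    apply Rle_plus_epsilon. intros d Hd.
    specialize (Ht (1 + C / d)).
    assert (HCd : 0 <= C / d) by (apply Rmult_le_pos; [lra | left; apply Rinv_0_lt_compat; lra]).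
    assert (HCdd : C = d * (C / d)) by (field; lra).
    pose proof (vnorm_nonneg (vsub w v)). nra. }
  intros v w. apply Rabs_le. pose proof (One v w). pose proof (One w v).
  rewrite (vnorm_sub_sym v w) in *. lra.
Qed.

Lemma lsc_add_lipschitz (f : X -> Rbar) (p : X -> R) L : lsc f -> (forall u, f u <> m_infty) ->
  0 <= L -> lipschitz p L -> lsc (fun u => Rbar_addr (p u) (f u)).
Proof.
  intros Hl Hm HL Hp x a Ha.
  assert (Heta : exists eta, 0 < eta /\ Rbar_lt (Finite (a - p x + eta)) (f x)).
  { destruct (f x) as [be| |] eqn:Ex; simpl in Ha.
    - apply Rbar_lt_finite in Ha. exists ((p x + be - a) / 2). split; [lra|].
      apply Rbar_lt_finite. lra.
    - exists 1. split; [lra | apply Rbar_lt_p_infty].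
    - exfalso; apply (Hm x); auto. }
  destruct Heta as [eta [Heta Hfx]].
  destruct (Hl x _ Hfx) as [d1 [Hd1 H1]].
  set (d := Rmin d1 (eta / (L + 1))).
  assert (Hd : 0 < d) by (apply Rmin_pos; auto; apply Rdiv_lt_0_compat; lra).
  assert (Hdd1 : d <= d1) by apply Rmin_l.
  assert (Hdeta : d <= eta / (L + 1)) by apply Rmin_r.
  exists d. split; auto. intros y Hy.
  assert (Hpy : p x - eta < p y).
  { pose proof (Rabs_le_between _ _ (Hp y x)).
    assert (Hyd : vnorm (vsub y x) < eta / (L + 1)) by lra.
    apply (Rmult_lt_compat_l (L + 1)) in Hyd; [|lra].
    replace ((L + 1) * (eta / (L + 1))) with eta in Hyd by (field; lra).
    pose proof (vnorm_nonneg (vsub y x)). lra. }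
  specialize (H1 y ltac:(lra)).
  destruct (f y) as [c| |]; simpl.
  - apply Rbar_lt_finite in H1. apply Rbar_lt_finite. lra.
  - apply Rbar_lt_p_infty.
  - destruct H1 as [[] _].
Qed.

Section Ekeland.
Variable phi : X -> Rbar.
Variable k : R.
Hypothesis phi_lsc : lsc phi.
Hypothesis phi_nonneg : forall u, Rbar_le (Finite 0) (phi u).
Hypothesis k_pos : 0 < k.

Definition phi_val (w : X) : R := match phi w with Finite r => r | _ => 0 end.

Definition improves (w y : X) : Prop :=
  (exists c, phi y = Finite c) /\ phi_val y + k * vnorm (vsub y w) <= phi_val w.

Definition best_improvement (w : X) : R := rglb (fun r => exists y, improves w y /\ r = phi_val y).

Lemma phi_val_finite w c : phi w = Finite c -> phi_val w = c.
Proof. intros H. unfold phi_val. rewrite H. reflexivity. Qed.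

Lemma phi_val_nonneg w : 0 <= phi_val w.
Proof. unfold phi_val. pose proof (phi_nonneg w). destruct (phi w); simpl in *; lra. Qed.

Lemma improves_refl w c : phi w = Finite c -> improves w w.
Proof. intros Hw. split; [eauto|]. rewrite vsub_self, vnorm_zero. lra. Qed.

Lemma improves_trans w y z : improves w y -> improves y z -> improves w z.
Proof. intros [_ H1] [Hz H2]. split; auto. pose proof (vnorm_sub_triangle z y w). nra. Qed.

Lemma best_improvement_le w y : improves w y -> best_improvement w <= phi_val y.
Proof.
  intros Hy. apply rglb_le; [|exists y; auto].
  exists 0. intros e [z [_ ->]]. apply phi_val_nonneg.
Qed.

Lemma improvement_step (w : X) (n : nat) :
  exists y, (exists c, phi w = Finite c) -> improves w y /\ phi_val y < best_improvement w + inv_succ n.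
Proof.
  destruct (classic (exists c, phi w = Finite c)) as [[c Hw] | Hw]; [|exists w; contradiction].
  destruct (rglb_approx (fun r => exists y, improves w y /\ r = phi_val y) (inv_succ n))
    as [e [[y [Hy ->]] He]].
  - exists (phi_val w), w. split; [apply (improves_refl w c Hw) | reflexivity].
  - exists 0. intros e [z [_ ->]]. apply phi_val_nonneg.
  - apply inv_succ_pos.
  - exists y. auto.
Qed.

Lemma ekeland_sequence u0 a0 : phi u0 = Finite a0 ->
  exists vs : nat -> X, vs O = u0 /\ forall n, improves (vs n) (vs (S n)) /\
    phi_val (vs (S n)) < best_improvement (vs n) + inv_succ n.
Proof.
  intros Hu0.
  set (next := fun w n => epsilon (inhabits w) (fun y => (exists c, phi w = Finite c) ->
                 improves w y /\ phi_val y < best_improvement w + inv_succ n)).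
  set (vs := fix vs (n : nat) : X := match n with O => u0 | S j => next (vs j) j end).
  exists vs. split; [reflexivity|].
  assert (Hstep : forall n, (exists c, phi (vs n) = Finite c) -> improves (vs n) (vs (S n)) /\
            phi_val (vs (S n)) < best_improvement (vs n) + inv_succ n).
  { intros n. change (vs (S n)) with (next (vs n) n). unfold next.
    apply (epsilon_spec (inhabits (vs n)) (fun y => (exists c, phi (vs n) = Finite c) ->
      improves (vs n) y /\ phi_val y < best_improvement (vs n) + inv_succ n)).
    apply improvement_step. }
  intros n. apply Hstep. destruct n as [|n]; [exists a0; exact Hu0|].
  induction n as [|n IH].
  - exact (proj1 (proj1 (Hstep O (ex_intro _ a0 Hu0)))).
  - exact (proj1 (proj1 (Hstep (S n) IH))).
Qed.

Section Sequence.
Variable vs : nat -> X.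
Hypothesis vs_start : exists c, phi (vs O) = Finite c.
Hypothesis vs_step : forall n, improves (vs n) (vs (S n)) /\
  phi_val (vs (S n)) < best_improvement (vs n) + inv_succ n.

Lemma ekeland_sequence_improves n m : (n <= m)%nat -> improves (vs n) (vs m).
Proof.
  intros Hnm. induction Hnm as [|m _ IH].
  - destruct n as [|n].
    + destruct vs_start as [c Hc]. apply (improves_refl _ c Hc).
    + destruct (vs_step n) as [[[c Hc] _] _]. apply (improves_refl _ c Hc).
  - eapply improves_trans; [exact IH | apply vs_step].
Qed.

Lemma ekeland_sequence_tail n y : improves (vs (S n)) y -> k * vnorm (vsub y (vs (S n))) <= inv_succ n.
Proof.
  intros Hy. pose proof (best_improvement_le _ _ (improves_trans _ _ _ (proj1 (vs_step n)) Hy)).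
  destruct (vs_step n) as [_ Hn]. destruct Hy as [_ Hy]. lra.
Qed.

Lemma ekeland_sequence_cauchy : forall e, 0 < e -> exists N, forall m j, (N <= m)%nat -> (N <= j)%nat ->
  vnorm (vadd (vs m) (vopp (vs j))) < e.
Proof.
  intros e He. destruct (inv_succ_small (e * k / 2)) as [n Hn]; [apply Rmult_lt_0_compat; nra | ].
  exists (S n). intros m j Hm Hj.
  pose proof (ekeland_sequence_tail n _ (ekeland_sequence_improves _ _ Hm)).
  pose proof (ekeland_sequence_tail n _ (ekeland_sequence_improves _ _ Hj)).
  pose proof (vnorm_sub_triangle (vs m) (vs (S n)) (vs j)) as T.
  rewrite (vnorm_sub_sym (vs (S n))) in T.
  change (vadd (vs m) (vopp (vs j))) with (vsub (vs m) (vs j)).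
  apply (Rmult_lt_reg_l k); auto. nra.
Qed.

Section Limit.
Variable l : X.
Hypothesis vs_cvg : forall e, 0 < e -> exists N, forall n, (N <= n)%nat -> vnorm (vadd (vs n) (vopp l)) < e.

(* Otherwise [phi l > phi_val (vs n) - k || l - vs n ||], and by lower semicontinuity the same holds at the
   points [vs m] close to [l], which improve [vs n]. *)
Lemma ekeland_limit_improves n : improves (vs n) l.
Proof.
  apply NNPP. intro Hn.
  set (B := phi_val (vs n) - k * vnorm (vsub l (vs n))).
  assert (Hex : exists eta, 0 < eta /\ Rbar_lt (Finite (B + eta)) (phi l)).
  { destruct (phi l) as [c| |] eqn:El.
    - assert (c > B).
      { apply Rnot_le_lt. intro Hc. apply Hn. split; [eauto|].
        rewrite (phi_val_finite _ _ El). unfold B in Hc. lra. }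
      exists ((c - B) / 2). split; [lra | apply Rbar_lt_finite; lra].
    - exists 1. split; [lra | apply Rbar_lt_p_infty].
    - pose proof (phi_nonneg l) as P. rewrite El in P. destruct P. }
  destruct Hex as [eta [Heta Hlt]].
  destruct (phi_lsc l (B + eta) Hlt) as [d [Hd Hnb]].
  destruct (vs_cvg (Rmin d (eta / k))) as [N HN]; [apply Rmin_pos; auto; apply Rdiv_lt_0_compat; auto|].
  set (m := Nat.max n N).
  assert (Hm : vnorm (vsub (vs m) l) < Rmin d (eta / k)) by (apply HN; unfold m; lia).
  assert (Hm1 : vnorm (vsub (vs m) l) < d) by (pose proof (Rmin_l d (eta / k)); lra).
  assert (Hm2 : k * vnorm (vsub (vs m) l) < eta).
  { apply (Rmult_lt_compat_l k) in Hm; auto.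
    pose proof (Rmin_r d (eta / k)). apply (Rmult_le_compat_l k) in H; [|lra].
    replace (k * (eta / k)) with eta in H by (field; lra). lra. }
  specialize (Hnb (vs m) Hm1).
  destruct (ekeland_sequence_improves n m ltac:(unfold m; lia)) as [[c Hc] Hs].
  rewrite Hc in Hnb. apply Rbar_lt_finite in Hnb. rewrite (phi_val_finite _ _ Hc) in Hs.
  pose proof (vnorm_sub_triangle l (vs m) (vs n)) as T. rewrite (vnorm_sub_sym l (vs m)) in T.
  unfold B in Hnb. nra.
Qed.

(* Anything improving [l] improves every [vs n], so it lies in the balls of radius [inv_succ n / k]
   around [vs (S n)], which shrink to [l]. *)
Lemma ekeland_limit_minimal w c : phi w = Finite c -> phi_val l <= c + k * vnorm (vsub w l).
Proof.
  intros Hc. apply Rnot_lt_le. intro Hlt.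
  assert (Hw : improves l w) by (split; [eauto | rewrite (phi_val_finite _ _ Hc); lra]).
  assert (Hz : vnorm (vsub w l) <= 0).
  { apply Rle_plus_epsilon. intros d Hd.
    destruct (inv_succ_small (d * k / 2)) as [n Hn]; [apply Rmult_lt_0_compat; nra|].
    pose proof (ekeland_sequence_tail n w (improves_trans _ _ _ (ekeland_limit_improves _) Hw)).
    pose proof (ekeland_sequence_tail n l (ekeland_limit_improves _)).
    pose proof (vnorm_sub_triangle w (vs (S n)) l) as T. rewrite (vnorm_sub_sym (vs (S n)) l) in T.
    apply (Rmult_le_reg_l k); auto. nra. }
  pose proof (vnorm_nonneg (vsub w l)).
  assert (w = l) as -> by (apply vnorm_sub_eq0; lra).
  rewrite vsub_self, vnorm_zero, (phi_val_finite _ _ Hc) in Hlt. lra.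
Qed.

End Limit.
End Sequence.

Theorem ekeland_variational u0 a0 : phi u0 = Finite a0 ->
  exists v b, phi v = Finite b /\ b + k * vnorm (vsub v u0) <= a0 /\
    forall w c, phi w = Finite c -> b <= c + k * vnorm (vsub w v).
Proof.
  intros Hu0. destruct (ekeland_sequence u0 a0 Hu0) as [vs [Hvs0 Hstep]].
  assert (Hstart : exists c, phi (vs O) = Finite c) by (rewrite Hvs0; eauto).
  destruct (vcomplete X vs (ekeland_sequence_cauchy vs Hstart Hstep)) as [l Hl].
  destruct (ekeland_limit_improves vs Hstart Hstep l Hl O) as [[b Hb] Hs].
  rewrite Hvs0, (phi_val_finite _ _ Hb), (phi_val_finite _ _ Hu0) in Hs.
  exists l, b. split; [|split]; auto.
  intros w c Hc. rewrite <- (phi_val_finite _ _ Hb). apply (ekeland_limit_minimal vs Hstart Hstep l Hl _ _ Hc).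
Qed.

End Ekeland.

(** * Subdifferentials *)

Lemma subdiff_le (f : X -> Rbar) v phi fv : f v = Finite fv -> subdiff f v phi ->
  is_dual phi /\ forall u be, f u = Finite be -> phi (vsub u v) + fv <= be.
Proof.
  intros Hv [Hd [fx [Hfx H]]]. rewrite Hv in Hfx. injection Hfx as <-. split; auto.
  intros u be Hu. specialize (H u). rewrite Hu in H. exact H.
Qed.

Lemma subdiff_intro (f : X -> Rbar) v phi fv : (forall u, f u <> m_infty) -> f v = Finite fv ->
  is_dual phi -> (forall u be, f u = Finite be -> phi (vsub u v) + fv <= be) -> subdiff f v phi.
Proof.
  intros Hm Hv Hd H. split; auto. exists fv; split; auto.
  intros u. destruct (f u) as [be| |] eqn:Eu; simpl; auto. exfalso; apply (Hm u); auto.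
Qed.

Lemma subdiff_closed (f : X -> Rbar) v phi fv : (forall u, f u <> m_infty) -> f v = Finite fv ->
  dclosure (subdiff f v) phi -> subdiff f v phi.
Proof.
  intros Hm Hv [Hd Hcl]. apply (subdiff_intro f v phi fv); auto.
  intros u be Hu. apply Rnot_lt_le. intro Hlt.
  set (g := phi (vsub u v) + fv - be).
  set (n := vnorm (vsub u v)).
  assert (Hn : 0 <= n) by apply vnorm_nonneg.
  destruct (Hcl (g / (n + 1))) as [psi [Hpsi Hlt2]]; [apply Rdiv_lt_0_compat; unfold g; lra|].
  destruct (subdiff_le f v psi fv Hv Hpsi) as [Hdp Hp].
  pose proof (Hp u be Hu).
  pose proof (dnorm_bound _ _ (is_dual_dsub _ _ Hdp Hd) (Rbar_lt_le _ _ Hlt2) (vsub u v)) as B.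
  apply Rabs_le_between in B. unfold dsub in B. fold n in B.
  assert (g / (n + 1) * n < g); [|unfold g in *; lra].
  apply (Rmult_lt_reg_r (n + 1)); [lra|].
  replace (g / (n + 1) * n * (n + 1)) with (g * n) by (field; lra). unfold g in *. nra.
Qed.

Lemma subdiff_ray (f : X -> Rbar) v (y : X -> R) s s' : (forall u, f u <> m_infty) ->
  subdiff f v dzero -> subdiff f v (fun h => s * y h) -> 0 <= s' <= s -> is_dual y ->
  subdiff f v (fun h => s' * y h).
Proof.
  intros Hm H0 Hs Hs' Hy. destruct H0 as [_ [fv [Hv H0]]].
  destruct (subdiff_le f v _ fv Hv Hs) as [_ Hs2].
  apply (subdiff_intro f v _ fv); auto; [apply is_dual_scal, Hy|].
  intros u be Hu. pose proof (Hs2 u be Hu). specialize (H0 u). rewrite Hu in H0. simpl in H0. unfold dzero in H0.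
  destruct (Rle_or_lt 0 (y (vsub u v))); nra.
Qed.

Lemma dnorm_scal_sub (y : X -> R) n s s' : (forall h, Rabs (y h) <= n * vnorm h) -> 0 <= n ->
  Rbar_le (dnorm (dsub (fun h => s * y h) (fun h => s' * y h))) (Finite (Rabs (s - s') * n)).
Proof.
  intros Hn Hn0. apply dnorm_le_of_bound; [apply Rmult_le_pos; [apply Rabs_pos | lra]|].
  intros h. unfold dsub. replace (s * y h - s' * y h) with ((s - s') * y h) by ring.
  rewrite Rabs_mult. pose proof (Hn h). pose proof (Rabs_pos (s - s')). nra.
Qed.

Lemma small_step r n : 0 < r -> 0 <= n -> 0 < r / (2 * (n + 1)) /\ r / (2 * (n + 1)) * n < r.
Proof.
  intros Hr Hn. split; [apply Rdiv_lt_0_compat; lra|].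
  apply (Rmult_lt_reg_r (2 * (n + 1))); [lra|].
  replace (r / (2 * (n + 1)) * n * (2 * (n + 1))) with (r * n) by (field; lra). nra.
Qed.

(* For a closed set [C] of functionals that is star-shaped around [0], the open ball of radius
   [d(0, bd C)] lies in [C]: on the ray through [y] the last point [s0 y] still in [C] is a boundary point. *)
Section Star_shaped.
Variable C : (X -> R) -> Prop.
Hypothesis C_closed : forall phi, dclosure C phi -> C phi.
Hypothesis C_zero : C dzero.
Hypothesis C_star : forall y s s', is_dual y -> C (fun h => s * y h) -> 0 <= s' <= s -> C (fun h => s' * y h).

Section Ray.
Variables (y : X -> R) (n s0 : R).
Hypothesis y_dual : is_dual y.
Hypothesis n_nonneg : 0 <= n.
Hypothesis y_bound : forall h, Rabs (y h) <= n * vnorm h.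
Hypothesis s0_ub : forall s, 0 <= s <= 1 -> C (fun h => s * y h) -> s <= s0.
Hypothesis s0_least : forall b, (forall s, 0 <= s <= 1 -> C (fun h => s * y h) -> s <= b) -> s0 <= b.

Lemma ray_zero : C (fun h => 0 * y h).
Proof.
  replace (fun h => 0 * y h) with (@dzero X); auto.
  apply functional_extensionality; intros; unfold dzero; ring.
Qed.

Lemma ray_sup_bounds : 0 <= s0 <= 1.
Proof. split; [apply s0_ub; [lra | apply ray_zero] | apply s0_least; intros s Hs _; lra]. Qed.

Lemma ray_near s s' r : 0 < r -> Rabs (s - s') <= r / (2 * (n + 1)) ->
  Rbar_lt (dnorm (dsub (fun h => s * y h) (fun h => s' * y h))) (Finite r).
Proof.
  intros Hr Hs. destruct (small_step r n Hr n_nonneg) as [_ Hsmall].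
  eapply Rbar_le_lt_trans; [apply dnorm_scal_sub; eauto|]. apply Rbar_lt_finite.
  pose proof (Rabs_pos (s - s')). nra.
Qed.

Lemma ray_below_sup s : 0 <= s < s0 -> C (fun h => s * y h).
Proof.
  intros Hs. apply NNPP. intro HnC.
  assert (s0 <= s); [|lra].
  apply s0_least. intros s1 Hs1 HC1. apply Rnot_lt_le. intro Hlt1. apply HnC.
  apply (C_star y s1 s); auto; lra.
Qed.

Lemma ray_sup_closure : dclosure C (fun h => s0 * y h).
Proof.
  pose proof ray_sup_bounds.
  split; [apply is_dual_scal, y_dual|]. intros r Hr.
  destruct (small_step r n Hr n_nonneg) as [Hr1 _].
  destruct (Rle_lt_dec s0 0) as [Hz | Hz].
  - exists (fun h => 0 * y h). split; [apply ray_zero|].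
    apply ray_near; auto. rewrite Rabs_left1 by lra. lra.
  - set (s := Rmax 0 (s0 - r / (2 * (n + 1)))).
    assert (Hs : 0 <= s < s0) by (split; [apply Rmax_l | apply Rmax_lub_lt; lra]).
    assert (Hs' : s0 - s <= r / (2 * (n + 1)))
      by (unfold s; pose proof (Rmax_r 0 (s0 - r / (2 * (n + 1)))); lra).
    exists (fun h => s * y h). split; [apply ray_below_sup; auto|].
    apply ray_near; auto. rewrite Rabs_left1 by lra. lra.
Qed.

Lemma ray_sup_not_interior : ~ C y -> ~ dinterior C (fun h => s0 * y h).
Proof.
  intros Hn [_ [r [Hr Hball]]]. pose proof ray_sup_bounds.
  destruct (Rlt_le_dec s0 1) as [Hs1 | Hs1].
  - destruct (small_step r n Hr n_nonneg) as [Hr1 _].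
    set (s1 := Rmin 1 (s0 + r / (2 * (n + 1)))).
    assert (Hs1' : s0 < s1 <= 1) by (split; [apply Rmin_glb_lt; lra | apply Rmin_l]).
    assert (Hs1'' : s1 - s0 <= r / (2 * (n + 1)))
      by (unfold s1; pose proof (Rmin_r 1 (s0 + r / (2 * (n + 1)))); lra).
    assert (s1 <= s0); [|lra].
    apply s0_ub; [lra|]. apply Hball; [apply is_dual_scal, y_dual|].
    apply ray_near; auto. rewrite Rabs_right by lra. lra.
  - apply Hn. replace y with (fun h => s0 * y h); [apply C_closed, ray_sup_closure|].
    apply functional_extensionality; intros h. replace s0 with 1 by lra. ring.
Qed.

End Ray.

Lemma star_shaped_ball y : is_dual y -> Rbar_lt (dnorm y) (ddist0 (dboundary C)) -> C y.
Proof.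
  intros Hy Hlt. apply NNPP. intro Hn.
  destruct (dnorm_finite _ Hy) as [n [Hn1 [Hn2 Hn3]]].
  set (S := fun s => 0 <= s <= 1 /\ C (fun h => s * y h)).
  assert (Hbound : bound S) by (exists 1; intros s [Hs _]; lra).
  destruct (completeness S Hbound (ex_intro _ 0 (conj (conj (Rle_refl 0) Rle_0_1) (ray_zero y))))
    as [s0 [Hub Hleast]].
  assert (Hub' : forall s, 0 <= s <= 1 -> C (fun h => s * y h) -> s <= s0)
    by (intros s Hs HC; apply Hub; split; auto).
  assert (Hleast' : forall b, (forall s, 0 <= s <= 1 -> C (fun h => s * y h) -> s <= b) -> s0 <= b)
    by (intros b Hb; apply Hleast; intros s [Hs HC]; auto).
  pose proof (ray_sup_bounds y s0 Hub' Hleast').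
  apply (Rbar_lt_not_le _ _ Hlt).
  apply (Rbar_le_trans _ (dnorm (fun h => s0 * y h))).
  - apply Rbar_inf_le. eexists. split; [|reflexivity]. split.
    + apply (ray_sup_closure y n); auto.
    + apply (ray_sup_not_interior y n); auto.
  - rewrite Hn1. apply dnorm_le_of_bound; auto. intros h. rewrite Rabs_mult, Rabs_right by lra.
    pose proof (Hn3 h). pose proof (Rabs_pos (y h)). pose proof (vnorm_nonneg h). nra.
Qed.

End Star_shaped.

(* If [v] minimizes [f + p + c || . - v ||] with [p] convex and [L]-Lipschitz, then [f] has a subgradient
   at [v] of norm at most [L + c].  It is a linear minorant, given by Hahn-Banach, of the convex function
   [h |-> inf_w f w - k (w - h)], where [k] is the concave minorant of [f] touching it at [v]. *)
Section Penalized_minimum.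
Variables (f : X -> Rbar) (p : X -> R) (v : X) (fv c L : R).
Hypothesis f_not_m_infty : forall u, f u <> m_infty.
Hypothesis f_convex : convex f.
Hypothesis p_convex : convex_real p.
Hypothesis f_v : f v = Finite fv.
Hypothesis c_nonneg : 0 <= c.
Hypothesis L_nonneg : 0 <= L.
Hypothesis p_lipschitz : lipschitz p L.
Hypothesis v_min : forall w be, f w = Finite be -> fv + p v <= be + p w + c * vnorm (vsub w v).

Definition touching_minorant (w : X) : R := fv + p v - p w - c * vnorm (vsub w v).

Definition minorant_gap (h : X) : R :=
  rglb (fun r => exists w be, f w = Finite be /\ r = be - touching_minorant (vsub w h)).

Lemma touching_minorant_le w be : f w = Finite be -> touching_minorant w <= be.
Proof. intros H. unfold touching_minorant. pose proof (v_min w be H). lra. Qed.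

Lemma touching_minorant_shift w h :
  touching_minorant w - touching_minorant (vsub w h) >= - (L + c) * vnorm h.
Proof.
  unfold touching_minorant. pose proof (Rabs_le_between _ _ (p_lipschitz (vsub w h) w)) as E1.
  rewrite vsub_sub_l, vnorm_opp in E1.
  pose proof (vnorm_sub_triangle w (vsub w h) v) as E2. rewrite vsub_sub_r in E2. nra.
Qed.

Lemma minorant_gap_nonempty h :
  exists r, exists w be, f w = Finite be /\ r = be - touching_minorant (vsub w h).
Proof. eexists. exists v, fv. split; [exact f_v | reflexivity]. Qed.

Lemma minorant_gap_bounded h : exists m, forall r,
  (exists w be, f w = Finite be /\ r = be - touching_minorant (vsub w h)) -> m <= r.
Proof.
  exists (- (L + c) * vnorm h). intros r [w [be [Hw ->]]].
  pose proof (touching_minorant_le w be Hw). pose proof (touching_minorant_shift w h). lra.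
Qed.

Lemma minorant_gap_le h w be : f w = Finite be -> minorant_gap h <= be - touching_minorant (vsub w h).
Proof. intros Hw. apply rglb_le; [apply minorant_gap_bounded | eauto]. Qed.

Lemma minorant_gap_approx h d : 0 < d ->
  exists w be, f w = Finite be /\ be - touching_minorant (vsub w h) < minorant_gap h + d.
Proof.
  intros Hd. destruct (rglb_approx _ d (minorant_gap_nonempty h) (minorant_gap_bounded h) Hd)
    as [r [[w [be [Hw ->]]] Hr]]. eauto.
Qed.

Lemma minorant_gap_zero : minorant_gap vzero = 0.
Proof.
  apply Rle_antisym.
  - pose proof (minorant_gap_le vzero v fv f_v). rewrite vsub_zero in H.
    unfold touching_minorant in H. rewrite vsub_self, vnorm_zero in H. lra.
  - apply rglb_ge; [apply minorant_gap_nonempty|]. intros r [w [be [Hw ->]]].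
    rewrite vsub_zero. pose proof (touching_minorant_le w be Hw). lra.
Qed.

Lemma minorant_gap_convex : convex_real minorant_gap.
Proof.
  intros h1 h2 t Ht. apply Rle_plus_epsilon. intros d Hd.
  destruct (minorant_gap_approx h1 d Hd) as [w1 [b1 [Hw1 E1]]].
  destruct (minorant_gap_approx h2 d Hd) as [w2 [b2 [Hw2 E2]]].
  set (w := vadd (vscal t w1) (vscal (1 - t) w2)).
  pose proof (f_convex w1 w2 b1 b2 t Ht) as Hfw. rewrite Hw1, Hw2 in Hfw.
  specialize (Hfw (Rle_refl _) (Rle_refl _)). fold w in Hfw.
  destruct (f w) as [be| |] eqn:Ew; simpl in Hfw; [|contradiction | exfalso; apply (f_not_m_infty w); auto].
  pose proof (minorant_gap_le (vadd (vscal t h1) (vscal (1 - t) h2)) w be Ew) as E3.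
  unfold w in E3. rewrite vsub_comb in E3.
  assert (touching_minorant (vadd (vscal t (vsub w1 h1)) (vscal (1 - t) (vsub w2 h2))) >=
          t * touching_minorant (vsub w1 h1) + (1 - t) * touching_minorant (vsub w2 h2)).
  { unfold touching_minorant. pose proof (p_convex (vsub w1 h1) (vsub w2 h2) t Ht).
    pose proof (vnorm_sub_comb_le t (vsub w1 h1) (vsub w2 h2) v Ht). nra. }
  nra.
Qed.

Lemma minorant_gap_opp_le y : minorant_gap (vopp y) <= (L + c) * vnorm y.
Proof.
  pose proof (minorant_gap_le (vopp y) v fv f_v) as E.
  replace (vsub v (vopp y)) with (vadd v y) in E by (unfold vsub; rewrite vopp_opp; reflexivity).
  unfold touching_minorant in E. rewrite vsub_add_l in E.
  pose proof (Rabs_le_between _ _ (p_lipschitz (vadd v y) v)) as E3. rewrite vsub_add_l in E3. nra.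
Qed.

Lemma subdiff_of_penalized_min : exists us, subdiff f v us /\ Rbar_le (dnorm us) (Finite (L + c)).
Proof.
  destruct (convex_dominated_linear minorant_gap minorant_gap_convex minorant_gap_zero) as [l [Hl Hle]].
  destruct (linear_bounded_dual l (L + c) Hl ltac:(lra)) as [Hd Hn].
  { intros y. pose proof (Hle y). pose proof (minorant_gap_opp_le (vopp y)).
    rewrite vopp_opp, vnorm_opp in *. lra. }
  exists l. split; auto.
  apply (subdiff_intro f v l fv); auto. intros w be Hw.
  pose proof (Hle (vsub w v)). pose proof (minorant_gap_le (vsub w v) w be Hw).
  rewrite vsub_sub_r in *. unfold touching_minorant in *. rewrite vsub_self, vnorm_zero in *. lra.
Qed.

End Penalized_minimum.

(** * Error bounds of perturbations *)

Lemma Er_fam_antitone (F G : (X -> Rbar) -> Prop) : (forall g, F g -> G g) ->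
  Rbar_le (Er_fam G) (Er_fam F).
Proof. intros H. apply Rbar_le_inf. intros y [g [Hg ->]]. apply Rbar_inf_le. eauto. Qed.

Lemma dual_shift_convex (xs : X -> R) x : is_dual xs -> convex_real (fun u => xs (vsub u x)).
Proof. intros Hd a b t Ht. rewrite !(dual_sub _ Hd), (dual_add _ Hd), !(dual_scal _ Hd). right; ring. Qed.

Lemma Ptb_wl_Ptb_w (f : X -> Rbar) eps g : Ptb_wl f eps g -> Ptb_w f eps g.
Proof.
  intros [x [xs [Hx [Hd [Hn Hg]]]]]. split.
  - exists x. unfold Sf. rewrite Hg, Hx, dual_self_zero by exact Hd. simpl; lra.
  - exists (fun u => xs (vsub u x)). split; [apply dual_shift_convex; auto|]. split; auto.
    exists x. split; auto. intros u. rewrite dual_self_zero, Rminus_0_r by exact Hd.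
    apply dnorm_bound; auto.
Qed.

Lemma Ptb_l_Ptb (f : X -> Rbar) eps g : Ptb_l f eps g -> Ptb f eps g.
Proof.
  intros [x [xi [xs [Hx [Hxi [Hd [Hn [Hc Hg]]]]]]]]. split.
  - exists x. unfold Sf. rewrite Hg, Hx, dual_self_zero by exact Hd. simpl; lra.
  - exists (fun u => xs (vsub u x)). split; [apply dual_shift_convex; auto|]. split; auto.
    exists x, xi. repeat split; auto.
    + rewrite dual_self_zero, Rabs_R0 by exact Hd. exact Hc.
    + intros u. rewrite dual_self_zero, Rminus_0_r by exact Hd. apply dnorm_bound; auto.
Qed.

Lemma Er_le_of_dist_ge (g : X -> Rbar) z G delta : g z = Finite G -> 0 < G -> 0 < delta ->
  Rbar_le (Finite delta) (Defs.dist z (Sf g)) -> Rbar_le (Er g) (Finite (G / delta)).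
Proof.
  intros Hz HG Hdelta Hdist. eapply Rbar_le_trans.
  { apply Rbar_inf_le. exists z. split; [rewrite Hz; apply Rbar_lt_finite; exact HG | reflexivity]. }
  rewrite Hz. destruct (Defs.dist z (Sf g)) as [D| |]; simpl in *; [|left; apply Rdiv_lt_0_compat; lra|contradiction].
  destruct (Rlt_dec 0 D) as [HD|]; [simpl|lra].
  apply Rmult_le_compat_l; [lra|]. apply Rinv_le_contravar; lra.
Qed.

Lemma dist_ge_of_halfspace (S : X -> Prop) (w : X -> R) z r a b : is_dual w -> 0 < r ->
  (forall h, Rabs (w h) <= r * vnorm h) -> (forall s, S s -> w s <= a) -> a + b <= w z ->
  Rbar_le (Finite (b / r)) (Defs.dist z S).
Proof.
  intros Hw Hr Hb HS Hz. apply Rbar_le_inf. intros y [s [Hs ->]]. simpl.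
  pose proof (HS s Hs). pose proof (Rabs_le_between _ _ (Hb (vsub s z))) as E.
  rewrite (dual_sub _ Hw) in E.
  apply (Rmult_le_reg_r r); auto. replace (b / r * r) with b by (field; lra). lra.
Qed.

Lemma subdiff_boundary_escape (f : X -> Rbar) x xst r : (forall u, f u <> m_infty) ->
  f x = Finite 0 -> ~ dinterior (subdiff f x) xst -> is_dual xst -> 0 < r ->
  exists psi z a, is_dual psi /\ Rbar_lt (dnorm (dsub psi xst)) (Finite r) /\
    f z = Finite a /\ a < psi (vsub z x).
Proof.
  intros Hm Hx Hnint Hxd Hr.
  assert (Hex : exists psi, is_dual psi /\ Rbar_lt (dnorm (dsub psi xst)) (Finite r) /\ ~ subdiff f x psi).
  { apply NNPP. intro H. apply Hnint. split; auto. exists r. split; auto. intros psi Hpsi Hl.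
    apply NNPP. intro H2. apply H. eauto. }
  destruct Hex as [psi [Hpd [Hpl Hpn]]].
  apply NNPP. intro H. apply Hpn. apply (subdiff_intro f x psi 0); auto.
  intros u be Hu. apply Rnot_lt_le. intro H2. apply H. exists psi, u, be. split; [|split; [|split]]; auto. lra.
Qed.

(* A functional [psi] close to the boundary point [xst] of [subdiff f x] but outside it yields the linear
   perturbation [psi - 2 xst] of norm [< ||xst|| + r], for which the error bound modulus is at most [2 r]. *)
Lemma Ptb_wl_Er_le_boundary (f : X -> Rbar) eps x xst n r : (forall u, f u <> m_infty) ->
  f x = Finite 0 -> dboundary (subdiff f x) xst -> 0 <= n -> (forall h, Rabs (xst h) <= n * vnorm h) ->
  0 < r -> n + r <= eps -> Rbar_le (Er_fam (Ptb_wl f eps)) (Finite (2 * r)).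
Proof.
  intros Hm Hx [Hcl Hnint] Hn0 Hn Hr Hre.
  assert (Hxd : is_dual xst) by apply Hcl.
  destruct (subdiff_le f x xst 0 Hx (subdiff_closed f x xst 0 Hm Hx Hcl)) as [_ Hxs].
  destruct (subdiff_boundary_escape f x xst r Hm Hx Hnint Hxd Hr) as [psi [z [a [Hpd [Hpl [Hza Ha]]]]]].
  set (w := dsub psi xst).
  assert (Hwd : is_dual w) by (apply is_dual_dsub; auto).
  pose proof (dnorm_bound w r Hwd (Rbar_lt_le _ _ Hpl)) as Hwb.
  set (xs := fun h => 1 * psi h + (-2) * xst h).
  assert (Hxsd : is_dual xs) by (apply is_dual_comb; auto).
  set (g := fun u => Rbar_addr (xs (vsub u x)) (f u)).
  assert (Hg : Ptb_wl f eps g).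
  { exists x, xs. split; [exact Hx | split; [exact Hxsd | split; [|reflexivity]]].
    apply dnorm_le_of_bound; [lra|].
    intros h. pose proof (Hwb h). pose proof (Hn h). unfold w, dsub, xs in *.
    replace (1 * psi h + -2 * xst h) with ((psi h - xst h) + - xst h) by ring.
    eapply Rle_trans; [apply Rabs_triang|]. rewrite Rabs_Ropp. pose proof (vnorm_nonneg h). nra. }
  eapply Rbar_le_trans; [apply Rbar_inf_le; exists g; split; [exact Hg | reflexivity]|].
  set (A := xst (vsub z x)). set (B := psi (vsub z x)).
  assert (HA : A <= a) by (pose proof (Hxs z a Hza); unfold A; lra).
  assert (HBA : 0 < B - A) by (unfold A, B in *; lra).
  apply (Rbar_le_trans _ (Finite ((xs (vsub z x) + a) / ((B - A) / r)))).
  2:{ simpl. unfold xs. fold B A.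
      replace ((1 * B + -2 * A + a) / ((B - A) / r)) with (r * ((B - 2 * A + a) / (B - A))) by (field; lra).
      rewrite (Rmult_comm 2 r). apply Rmult_le_compat_l; [lra|]. apply (Rmult_le_reg_r (B - A)); auto.
      replace ((B - 2 * A + a) / (B - A) * (B - A)) with (B - 2 * A + a) by (field; lra). unfold B; lra. }
  apply (Er_le_of_dist_ge g z).
  - unfold g. rewrite Hza. reflexivity.
  - unfold xs, A, B in *. lra.
  - apply Rdiv_lt_0_compat; unfold A, B in *; lra.
  - apply (dist_ge_of_halfspace _ w z r (w x) (B - A) Hwd Hr Hwb).
    + intros s Hs. unfold Sf, g in Hs. destruct (f s) as [b| |] eqn:Es; simpl in Hs; try contradiction.
      2:{ exfalso; apply (Hm s); auto. }
      pose proof (Hxs s b Es). unfold xs, w, dsub in *. rewrite !(dual_sub _ Hpd), !(dual_sub _ Hxd) in *. lra.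
    + unfold w, dsub, A, B. rewrite !(dual_sub _ Hpd), !(dual_sub _ Hxd). lra.
Qed.

Lemma Ptb_wl_Er_pos_bd_ge (f : X -> Rbar) eps : Gamma0 f ->
  Rbar_lt (Finite 0) (Er_fam (Ptb_wl f eps)) -> Rbar_le (Finite eps) (subdiff_bd f).
Proof.
  intros [[_ Hm] _] Hpos. apply NNPP. intro Hn.
  destruct (Rbar_inf_lt _ _ Hn) as [y [[x [Hx ->]] Hy]].
  destruct (Rbar_inf_lt _ _ Hy) as [y' [[xst [Hb ->]] Hy']].
  destruct (dnorm_finite _ (proj1 (proj1 Hb))) as [n [Hn1 [Hn2 Hn3]]].
  rewrite Hn1 in Hy'. simpl in Hy'.
  apply (Rbar_lt_not_le _ _ Hpos), (Rbar_le_zero_of_small_bounds _ (eps - n)); [lra|].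
  intros r Hr Hre. apply (Ptb_wl_Er_le_boundary f eps x xst n r); auto; lra.
Qed.

Lemma lsc_pos_part (g : X -> Rbar) : lsc g -> lsc (fun w => Rbar_pos_part (g w)).
Proof.
  intros Hg w a Ha. destruct (Rlt_dec a 0) as [Hneg | Hnneg].
  - exists 1. split; [lra|]. intros y _. eapply Rbar_lt_le_trans; [|apply Rbar_pos_part_nonneg].
    apply Rbar_lt_finite; auto.
  - destruct (Hg w a (Rbar_lt_pos_part a _ ltac:(lra) Ha)) as [d [Hd Hnb]].
    exists d. split; auto. intros y Hy. apply Rbar_pos_part_lt, Hnb, Hy.
Qed.

(* Moving from [v] a fraction [t] of the way to [w] stays in the neighbourhood, and convexity
   transports the inequality back to [w]. *)
Lemma convex_local_min_global (f : X -> Rbar) (p : X -> R) v fv c del :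
  (forall u, f u <> m_infty) -> convex f -> convex_real p -> f v = Finite fv -> 0 < del ->
  (forall y fy, f y = Finite fy -> vnorm (vsub y v) < del -> fv + p v <= fy + p y + c * vnorm (vsub y v)) ->
  forall w be, f w = Finite be -> fv + p v <= be + p w + c * vnorm (vsub w v).
Proof.
  intros Hm Hcv Hp Hv Hdel Hloc w be Hw.
  set (nw := vnorm (vsub w v)). assert (Hnw : 0 <= nw) by apply vnorm_nonneg.
  set (t := Rmin 1 (del / (2 * (nw + 1)))).
  assert (Ht : 0 < t <= 1) by (split; [apply Rmin_pos; [lra | apply Rdiv_lt_0_compat; lra] | apply Rmin_l]).
  assert (Htd : t * nw < del).
  { apply (Rle_lt_trans _ (del / (2 * (nw + 1)) * nw)); [apply Rmult_le_compat_r; [lra | apply Rmin_r]|].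
    apply (Rmult_lt_reg_r (2 * (nw + 1))); [lra|].
    replace (del / (2 * (nw + 1)) * nw * (2 * (nw + 1))) with (del * nw) by (field; lra). nra. }
  set (y := vadd (vscal t w) (vscal (1 - t) v)).
  assert (Hyv : vnorm (vsub y v) = t * nw) by (apply vnorm_sub_comb_r; lra).
  pose proof (Hcv w v be fv t ltac:(lra)) as Hconv. rewrite Hw, Hv in Hconv.
  specialize (Hconv (Rle_refl _) (Rle_refl _)). fold y in Hconv.
  pose proof (Hp w v t ltac:(lra)) as Hpc. fold y in Hpc.
  destruct (f y) as [fy| |] eqn:Efy; simpl in Hconv; [|contradiction | exfalso; apply (Hm y); auto].
  pose proof (Hloc y fy Efy ltac:(lra)) as Hk. rewrite Hyv in Hk.
  assert (t * (fv + p v) <= t * (be + p w + c * nw)) by nra.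
  apply Rmult_le_reg_l in H; lra.
Qed.

Lemma subdiff_interior_growth (f : X -> Rbar) x rho : (forall u, f u <> m_infty) -> f x = Finite 0 ->
  dinterior (subdiff f x) dzero -> 0 <= rho -> Rbar_lt (Finite rho) (ddist0 (dboundary (subdiff f x))) ->
  forall w be, f w = Finite be -> rho * vnorm (vsub w x) <= be.
Proof.
  intros Hm Hx Hint Hrho Hlt w be Hw.
  assert (C0 : subdiff f x dzero).
  { destruct Hint as [_ [r [Hr Hb]]]. apply Hb; [apply is_dual_zero|].
    apply (dnorm_lt_of_bound _ 0); [lra | auto|]. intros h. unfold dsub, dzero. rewrite Rminus_0_r, Rabs_R0. lra. }
  destruct (norming_functional (vsub w x)) as [l [Hld [Hln Hlw]]].
  assert (Hys : subdiff f x (fun h => rho * l h)).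
  { apply (star_shaped_ball (subdiff f x)); auto.
    - intros phi. apply (subdiff_closed f x phi 0); auto.
    - intros y s s' Hy Hs Hs'. apply (subdiff_ray f x y s s'); auto.
    - apply is_dual_scal; auto.
    - eapply Rbar_le_lt_trans; [|exact Hlt]. apply dnorm_le_of_bound; auto.
      intros h. rewrite Rabs_mult, Rabs_right by lra. pose proof (dnorm_bound l 1 Hld Hln h). nra. }
  destruct (subdiff_le f x _ 0 Hx Hys) as [_ H]. specialize (H w be Hw). rewrite Hlw in H. lra.
Qed.

Section Perturbed.
Variables (f : X -> Rbar) (p : X -> R) (xi : R).
Hypothesis f_not_m_infty : forall u, f u <> m_infty.
Hypothesis f_convex : convex f.
Hypothesis f_lsc : lsc f.
Hypothesis p_convex : convex_real p.
Hypothesis xi_nonneg : 0 <= xi.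
Hypothesis p_lipschitz : lipschitz p xi.

Let g (u : X) : Rbar := Rbar_addr (p u) (f u).

(* Ekeland's principle applied to [max(g, 0)] from a point [u] violating the error bound with modulus [m]. *)
Lemma ekeland_descent_point u fu m D : f u = Finite fu -> 0 < p u + fu -> 0 < m ->
  (forall s, Sf g s -> D <= vnorm (vsub s u)) -> p u + fu < m * D ->
  exists v fv c, f v = Finite fv /\ 0 < p v + fv /\ 0 <= c < m /\
    forall w be, f w = Finite be -> fv + p v <= be + p w + c * vnorm (vsub w v).
Proof.
  intros Hu Ha0 Hm HD Hlt. set (a0 := p u + fu) in *.
  assert (HaD : a0 / m < D) by (apply (Rmult_lt_reg_r m); auto; replace (a0 / m * m) with a0 by (field; lra); lra).
  assert (Ham : 0 < a0 / m) by (apply Rdiv_lt_0_compat; auto).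
  set (lam := (a0 / m + D) / 2).
  set (c := a0 / lam).
  assert (Hc : 0 < c) by (apply Rdiv_lt_0_compat; unfold lam; lra).
  assert (Hcm : c < m).
  { unfold c. apply (Rmult_lt_reg_r lam); [unfold lam; lra|]. replace (a0 / lam * lam) with a0 by (field; unfold lam; lra).
    apply (Rmult_lt_reg_r (/ m)); [apply Rinv_0_lt_compat; lra|].
    replace (m * lam * / m) with lam by (field; lra). unfold lam. fold (a0 / m). lra. }
  set (phi := fun w => Rbar_pos_part (g w)).
  assert (Hglsc : lsc g) by (apply (lsc_add_lipschitz f p xi); auto).
  assert (Hphiu : phi u = Finite a0) by (unfold phi, g; rewrite Hu; simpl; f_equal; apply Rmax_left; lra).
  destruct (ekeland_variational phi c (lsc_pos_part g Hglsc) (fun w => Rbar_pos_part_nonneg (g w)) Hc u a0 Hphiu)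
    as [v [b [Hphiv [Hvu Hek]]]].
  assert (Hb0 : 0 <= b) by (pose proof (Rbar_pos_part_nonneg (g v)) as H; fold (phi v) in H; rewrite Hphiv in H; exact H).
  assert (Hgv : Rbar_lt (Finite 0) (g v)).
  { apply Rbar_not_le_lt. intro Hle. pose proof (HD v Hle).
    assert (c * vnorm (vsub v u) < c * D); [|pose proof (vnorm_nonneg (vsub v u)); nra].
    apply (Rle_lt_trans _ a0); [lra|]. unfold c.
    replace (a0 / lam * D) with (a0 * (D / lam)) by (field; unfold lam; lra).
    rewrite <- (Rmult_1_r a0) at 1. apply Rmult_lt_compat_l; [lra|].
    apply (Rmult_lt_reg_r lam); [unfold lam; lra|]. replace (D / lam * lam) with D by (field; unfold lam; lra).
    unfold lam; lra. }
  destruct (Hglsc v 0 Hgv) as [del [Hdel Hnb]].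
  unfold g in Hgv. unfold phi, g in Hphiv.
  destruct (f v) as [fv| |] eqn:Efv; [|discriminate | exfalso; apply (f_not_m_infty v); auto].
  apply Rbar_lt_finite in Hgv. simpl in Hphiv. injection Hphiv as Hb.
  rewrite Rmax_left in Hb by lra. subst b.
  exists v, fv, c. split; [|split; [|split]]; auto; [lra|].
  apply (convex_local_min_global f p v fv c del); auto.
  intros y fy Hy Hyv. specialize (Hnb y Hyv). unfold g in Hnb. rewrite Hy in Hnb.
  apply Rbar_lt_finite in Hnb.
  assert (Hphiy : phi y = Finite (p y + fy)) by (unfold phi, g; rewrite Hy; simpl; f_equal; apply Rmax_left; lra).
  pose proof (Hek y _ Hphiy). lra.
Qed.

(* In the interior case [f] grows like [rho || . - x ||] with [rho > xi + c]; this is incompatible with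
   the subgradient [us] at [v] unless [v = x], which contradicts [g v > 0 >= g x]. *)
Lemma tau_le_of_subgradient x y0 v fv us c : f x = Finite 0 -> Sf g y0 -> f v = Finite fv ->
  0 < p v + fv -> subdiff f v us -> Rbar_le (dnorm us) (Finite (xi + c)) -> 0 <= c ->
  Rbar_le (tau f x xi (Rabs (p x))) (Finite (xi + c)).
Proof.
  intros Hx Hy0 Hv Hgv Hus Husn Hc.
  destruct (subdiff_le f v us fv Hv Hus) as [Husd Hus2].
  pose proof (Rabs_le_between _ _ (p_lipschitz v x)) as Lvx.
  unfold tau. destruct (excluded_middle_informative (dinterior (subdiff f x) dzero)) as [Hint | Hnint].
  - apply NNPP; intro H. apply Rbar_not_le_lt, Rbar_lt_finite_dense in H as [rho [Hrho1 Hrho2]].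
    pose proof (subdiff_interior_growth f x rho f_not_m_infty Hx Hint ltac:(lra) Hrho2) as Hgrow.
    unfold Sf, g in Hy0. destruct (f y0) as [be0| |] eqn:Ey0; simpl in Hy0; try contradiction.
    2:{ exfalso; apply (f_not_m_infty y0); auto. }
    pose proof (Hgrow y0 be0 Ey0). pose proof (Rabs_le_between _ _ (p_lipschitz y0 x)).
    assert (Hpx : p x <= 0) by (pose proof (vnorm_nonneg (vsub y0 x)); nra).
    pose proof (Hgrow v fv Hv).
    pose proof (Hus2 x 0 Hx) as Ux. rewrite (dual_sub _ Husd) in Ux.
    pose proof (Rabs_le_between _ _ (dnorm_bound us _ Husd Husn (vsub v x))) as Ub.
    rewrite (dual_sub _ Husd) in Ub.
    destruct (vnorm_nonneg (vsub v x)) as [Hpos | Hz]; [nra|].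
    symmetry in Hz. apply vnorm_sub_eq0 in Hz. subst v. rewrite Hx in Hv. injection Hv as <-. lra.
  - apply (Rbar_le_trans _ (ddist0 (subdiff f v))).
    + apply Rbar_inf_le. exists v. split; [|reflexivity]. rewrite Hv. simpl.
      pose proof (Rle_abs (p x)). lra.
    + apply (Rbar_le_trans _ (dnorm us)); auto. apply Rbar_inf_le. eauto.
Qed.

End Perturbed.

(* A point [u] violating the error bound with modulus [m] yields, through Ekeland's principle, a point [v]
   with a subgradient of norm [< xi + m]; it bounds [tau], which the defining inequality of [Ptb] forbids. *)
Lemma Ptb_Er_ge (f : X -> Rbar) eps m : Gamma0 f -> 0 < m ->
  (forall xi c t, 0 <= xi -> c < m -> Rbar_le t (Finite (xi + c)) ->
     ~ Rbar_le (Rbar_addr xi (subdiff_bd f)) (Rbar_addr eps t)) ->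
  forall g, Ptb f eps g -> Rbar_le (Finite m) (Er g).
Proof.
  intros [[_ Hm] [Hcv Hlsc]] Hmpos Hmk g [[y0 Hy0] [p [Hp [Hg [x [xi [Hx [Hxi [Hcond Hlipx]]]]]]]]].
  assert (Eg : g = fun u => Rbar_addr (p u) (f u)) by (apply functional_extensionality; auto).
  subst g. clear Hg. pose proof (convex_lipschitz_at p x xi Hxi Hp Hlipx) as Hlip.
  apply Rbar_le_inf. intros r [u [Hu ->]]. apply NNPP; intro Hnot.
  destruct (f u) as [fu| |] eqn:Efu; simpl in Hu; [| apply Hnot; exact I | destruct Hu as [[] _]].
  apply Rbar_lt_finite in Hu.
  set (Sg := Sf (fun u => Rbar_addr (p u) (f u))) in Hnot.
  assert (Dlow : Rbar_le (Finite 0) (Defs.dist u Sg))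
    by (apply Rbar_le_inf; intros y [s [_ ->]]; apply vnorm_nonneg).
  assert (Dup : Rbar_le (Defs.dist u Sg) (Finite (vnorm (vsub y0 u)))) by (apply Rbar_inf_le; eauto).
  destruct (Rbar_finite_between _ _ _ Dlow Dup) as [D [HD _]].
  rewrite HD in Hnot. simpl in Hnot.
  destruct (Rlt_dec 0 D) as [HDpos | HDpos]; [|apply Hnot; exact I]. simpl in Hnot.
  assert (Hlt : p u + fu < m * D).
  { apply Rnot_le_lt in Hnot. apply (Rmult_lt_compat_r D) in Hnot; auto.
    replace ((p u + fu) / D * D) with (p u + fu) in Hnot by (field; lra). lra. }
  assert (HDs : forall s, Sg s -> D <= vnorm (vsub s u)).
  { intros s Hs. assert (H : Rbar_le (Defs.dist u Sg) (Finite (vnorm (vsub s u)))) by (apply Rbar_inf_le; eauto).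
    rewrite HD in H. exact H. }
  destruct (ekeland_descent_point f p xi Hm Hcv Hlsc Hp Hxi Hlip u fu m D Efu Hu Hmpos HDs Hlt)
    as [v [fv [c [Hv [Hgv [Hc Hmin]]]]]].
  destruct (subdiff_of_penalized_min f p v fv c xi Hm Hcv Hp Hv (proj1 Hc) Hxi Hlip Hmin) as [us [Hus Husn]].
  apply (Hmk xi c (tau f x xi (Rabs (p x))) Hxi (proj2 Hc)); auto.
  apply (tau_le_of_subgradient f p xi Hm Hxi Hlip x y0 v fv us c); auto. apply Hc.
Qed.

Lemma Ptb_Er_pos (f : X -> Rbar) eps : Gamma0 f ->
  Rbar_lt (Finite eps) (subdiff_bd f) -> Rbar_lt (Finite 0) (Er_fam (Ptb f eps)).
Proof.
  intros Hf Hlt.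
  assert (Hex : exists m, 0 < m /\ forall xi c t, 0 <= xi -> c < m -> Rbar_le t (Finite (xi + c)) ->
     ~ Rbar_le (Rbar_addr xi (subdiff_bd f)) (Rbar_addr eps t)).
  { destruct (subdiff_bd f) as [B| |].
    - apply Rbar_lt_finite in Hlt. exists (B - eps). split; [lra|].
      intros xi c [T| |] Hxi Hc Ht Hle; simpl in *; auto; lra.
    - exists 1. split; [lra|]. intros xi c [] Hxi Hc Ht Hle; simpl in *; auto.
    - destruct Hlt as [[] _]. }
  destruct Hex as [m [Hm Hmk]].
  apply (Rbar_lt_le_trans _ (Finite m)); [apply Rbar_lt_finite; auto|].
  apply Rbar_le_inf. intros y [g [Hg ->]]. apply (Ptb_Er_ge f eps m); auto.
Qed.

End Banach_space.

Theorem mainTheorem10 (X : Banach) (f : X -> Rbar) (eps : R)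
  (hf : Gamma0 f) (hS : exists x, Sf f x) (heps : 0 <= eps) :
  (Rbar_lt (Finite 0) (Er_fam (Ptb_w f eps)) -> Rbar_lt (Finite 0) (Er_fam (Ptb_wl f eps))) /\
  (Rbar_lt (Finite 0) (Er_fam (Ptb_wl f eps)) -> Rbar_le (Finite eps) (subdiff_bd f)) /\
  (Rbar_lt (Finite eps) (subdiff_bd f) -> Rbar_lt (Finite 0) (Er_fam (Ptb f eps))) /\
  (Rbar_lt (Finite 0) (Er_fam (Ptb f eps)) -> Rbar_lt (Finite 0) (Er_fam (Ptb_l f eps))).
Proof.
  split; [|split; [|split]].
  - intros H. eapply Rbar_lt_le_trans; [exact H|]. apply Er_fam_antitone, Ptb_wl_Ptb_w.
  - apply Ptb_wl_Er_pos_bd_ge, hf.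
  - apply Ptb_Er_pos, hf.
  - intros H. eapply Rbar_lt_le_trans; [exact H|]. apply Er_fam_antitone, Ptb_l_Ptb.
Qed.
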